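(* Assume the spectrum of $A$ is a finite or countable set of eigenvalues without finite accumulation points. Let $K_0\ge0$, $p>0$, $q>0$, and let $u$ be a global solution of $$|u''+2\delta u'+Au|\le K_0\left(|u|^{1+p}+|A^{1/2}u|^{1+q}\right)$$ (in the sense given in the context) with $\lim_{t\to\infty}|u(t)|_{D(A^{1/2})}=0$. Suppose moreover that there exists $\gamma>2\delta$ such that $$\lim_{t\to+\infty}\left(|u'(t)|+|u(t)|_{D(A^{1/2})}\right)e^{\gamma t}=0.$$ Then $u\equiv0$.
   Context: $H$ is a separable real Hilbert space with norm $|\cdot|$. $A$ is a self-adjoint nonnegative operator with dense domain $D(A)$. $D(A^{1/2})$ carries the norm $|u|_{D(A^{1/2})}=(|u|^2+|A^{1/2}u|^2)^{1/2}$. The constant $\delta>0$ is fixed. A global solution of the differential inequality is a function $u\in C^0([0,\infty),D(A^{1/2}))\cap C^1([0,\infty),H)$ for which there exists $g\in C^0([0,\infty),H)$ such that: - $u$ is the weak solution of $u''+2\delta u'+Au=g$ on $[0,\infty)$; - $|g(t)|\le K_0(|u(t)|^{1+p}+|A^{1/2}u(t)|^{1+q})$ for all $t\ge0$. *)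

From Stdlib Require Import Reals Lra.
Open Scope R_scope.

Set Implicit Arguments.

Record RHilbert := {
  hcar :> Type;
  hzero : hcar;
  hadd : hcar -> hcar -> hcar;
  hopp : hcar -> hcar;
  hscal : R -> hcar -> hcar;
  hinner : hcar -> hcar -> R;
  hadd_assoc : forall x y z, hadd x (hadd y z) = hadd (hadd x y) z;
  hadd_comm : forall x y, hadd x y = hadd y x;
  hadd_0 : forall x, hadd x hzero = x;
  hadd_opp : forall x, hadd x (hopp x) = hzero;
  hscal_assoc : forall a b x, hscal a (hscal b x) = hscal (a * b) x;
  hscal_1 : forall x, hscal 1 x = x;
  hscal_distr_l : forall a x y, hscal a (hadd x y) = hadd (hscal a x) (hscal a y);
  hscal_distr_r : forall a b x, hscal (a + b) x = hadd (hscal a x) (hscal b x);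
  hinner_sym : forall x y, hinner x y = hinner y x;
  hinner_add_l : forall x y z, hinner (hadd x y) z = hinner x z + hinner y z;
  hinner_scal_l : forall a x y, hinner (hscal a x) y = a * hinner x y;
  hinner_pos : forall x, 0 <= hinner x x;
  hinner_def : forall x, hinner x x = 0 -> x = hzero;
  hcomplete : forall s : nat -> hcar,
    (forall eps, 0 < eps -> exists N, forall m n, (N <= m)%nat -> (N <= n)%nat ->
        sqrt (hinner (hadd (s m) (hopp (s n))) (hadd (s m) (hopp (s n)))) < eps) ->
    exists l, forall eps, 0 < eps -> exists N, forall n, (N <= n)%nat ->
        sqrt (hinner (hadd (s n) (hopp l)) (hadd (s n) (hopp l))) < eps;
  hseparable : exists d : nat -> hcar, forall x eps, 0 < eps ->
    exists n, sqrt (hinner (hadd x (hopp (d n))) (hadd x (hopp (d n)))) < eps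
}.

Arguments hzero {r}.
Arguments hadd {r}.
Arguments hopp {r}.
Arguments hscal {r}.
Arguments hinner {r}.

Section HDefs.
Variable X : RHilbert.

Definition hsub (x y : X) : X := hadd x (hopp y).
Definition hnorm (x : X) : R := sqrt (hinner x x).

(** An (unbounded) operator is a pair (D, A): a domain predicate and a map,
    only meaningful on D. *)
Definition is_subspace (D : X -> Prop) : Prop :=
  D (@hzero X) /\ (forall x y, D x -> D y -> D (hadd x y)) /\
  (forall a x, D x -> D (hscal a x)).

Definition is_dense (D : X -> Prop) : Prop :=
  forall x eps, 0 < eps -> exists y, D y /\ hnorm (hsub x y) < eps.

Definition linear_on (D : X -> Prop) (A : X -> X) : Prop :=
  (forall x y, D x -> D y -> A (hadd x y) = hadd (A x) (A y)) /\
  (forall a x, D x -> A (hscal a x) = hscal a (A x)).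

Definition nonneg_self_adjoint (D : X -> Prop) (A : X -> X) : Prop :=
  is_subspace D /\ is_dense D /\ linear_on D A /\
  (forall x y, D x -> D y -> hinner (A x) y = hinner x (A y)) /\
  (* A* ⊆ A *)
  (forall y z, (forall x, D x -> hinner (A x) y = hinner x z) -> D y /\ A y = z) /\
  (forall x, D x -> 0 <= hinner (A x) x).

Definition is_sqrt_op (DA : X -> Prop) (A : X -> X) (DB : X -> Prop) (B : X -> X) : Prop :=
  nonneg_self_adjoint DB B /\
  (forall x, DA x <-> (DB x /\ DB (B x))) /\
  (forall x, DA x -> B (B x) = A x).

Definition in_resolvent (D : X -> Prop) (A : X -> X) (lam : R) : Prop :=
  (forall y, exists x, D x /\ hsub (A x) (hscal lam x) = y) /\
  (forall x1 x2, D x1 -> D x2 ->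
      hsub (A x1) (hscal lam x1) = hsub (A x2) (hscal lam x2) -> x1 = x2) /\
  (exists C, forall x, D x -> hnorm x <= C * hnorm (hsub (A x) (hscal lam x))).

Definition in_spectrum (D : X -> Prop) (A : X -> X) (lam : R) : Prop :=
  ~ in_resolvent D A lam.

Definition is_eigenvalue (D : X -> Prop) (A : X -> X) (lam : R) : Prop :=
  exists x, D x /\ x <> @hzero X /\ A x = hscal lam x.

Definition discrete_point_spectrum (D : X -> Prop) (A : X -> X) : Prop :=
  (forall lam, in_spectrum D A lam -> is_eigenvalue D A lam) /\
  (exists f : nat -> R, forall lam, in_spectrum D A lam -> exists n, f n = lam) /\
  (forall l0, exists eps, 0 < eps /\
     forall lam, in_spectrum D A lam -> Rabs (lam - l0) < eps -> lam = l0).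

Definition hcont_pos (u : R -> X) : Prop :=
  forall t, 0 <= t -> forall eps, 0 < eps -> exists d, 0 < d /\
    forall s, 0 <= s -> Rabs (s - t) < d -> hnorm (hsub (u s) (u t)) < eps.

Definition hderiv_pos (u : R -> X) (v : X) (t : R) : Prop :=
  forall eps, 0 < eps -> exists d, 0 < d /\
    forall h, h <> 0 -> 0 <= t + h -> Rabs h < d ->
      hnorm (hsub (hscal (/ h) (hsub (u (t + h)) (u t))) v) < eps.

End HDefs.

Arguments hsub {X}.
Arguments hnorm {X}.
Arguments is_subspace {X}.
Arguments is_dense {X}.
Arguments linear_on {X}.
Arguments nonneg_self_adjoint {X}.
Arguments is_sqrt_op {X}.
Arguments in_resolvent {X}.
Arguments in_spectrum {X}.
Arguments is_eigenvalue {X}.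
Arguments discrete_point_spectrum {X}.
Arguments hcont_pos {X}.
Arguments hderiv_pos {X}.

(** power with the convention 0^a = 0 (for a > 0), x^a = Rpower x a for x > 0 *)
Definition rpow (x a : R) : R := if Rle_dec x 0 then 0 else Rpower x a.

(** Global solution of |u'' + 2 delta u' + A u| <= K0 (|u|^{1+p} + |A^{1/2}u|^{1+q})
    in the sense of the context; A^{1/2} is (DB, B), u' is the derivative du. *)
Definition global_solution {X : RHilbert} (DB : X -> Prop) (B : X -> X)
  (delta K0 p q : R) (u du : R -> X) : Prop :=
  (* u in C^0([0,oo), D(A^{1/2})) *)
  (forall t, 0 <= t -> DB (u t)) /\ hcont_pos u /\ hcont_pos (fun t => B (u t)) /\
  (* u in C^1([0,oo), H) with derivative du *)
  (forall t, 0 <= t -> hderiv_pos u (du t) t) /\ hcont_pos du /\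
  exists g : R -> X, hcont_pos g /\
    (* weak solution of u'' + 2 delta u' + A u = g on [0, oo) *)
    (forall v, DB v -> forall t, 0 < t ->
       derivable_pt_lim (fun s => hinner (du s) v) t
         (hinner (g t) v - 2 * delta * hinner (du t) v - hinner (B (u t)) (B v))) /\
    (forall t, 0 <= t ->
       hnorm (g t) <= K0 * (rpow (hnorm (u t)) (1 + p) + rpow (hnorm (B (u t))) (1 + q))).

Definition dnorm {X : RHilbert} (B : X -> X) (x : X) : R :=
  sqrt (hnorm x ^ 2 + hnorm (B x) ^ 2).

From Stdlib Require Import Reals Lra Psatz Classical ClassicalEpsilon FunctionalExtensionality.
Open Scope R_scope.

(* Take [kappa = gamma - 2 delta], [a = 4 delta + kappa], [mu = 4 delta kappa] and the energy
   [E = |u'|^2 + |A^{1/2} u|^2 + mu |u|^2].  The choice of [mu] makes the damping absorb the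
   cross term, so that in the sense of right Dini derivatives
   [(sqrt E)' >= - (a/2) sqrt E - |g|].  Where [u] is small, the superlinear bound gives
   [|g| <= L sqrt E], hence [sqrt E(t) exp ((a/2 + L) t)] is nondecreasing.  For large [t] one
   can take [L <= gamma - a/2], and the weighted energy is then dominated by
   [(|u'| + |u|_{D(A^{1/2})}) exp (gamma t) -> 0], so [E] vanishes for large times; on a bounded
   interval the same monotonicity, with a larger [L], propagates [E = 0] backwards.
   [E] is not differentiable a priori: the inequality is proved for the energy of
   [J_c u = c (A + c)^{-1} u] and passed to the limit [c -> +oo]. *)

Set Implicit Arguments.

(** * Real analysis *)

Lemma quadratic_nonneg_discr (a b c : R) :
  0 <= c -> (forall t, 0 <= a - 2 * t * b + t * t * c) -> b * b <= a * c.
Proof.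
  intros Hc H. destruct (Req_dec c 0) as [->|Hc0].
  - destruct (Req_dec b 0) as [->|Hb]; [nra|].
    specialize (H ((a + 1) / (2 * b))).
    replace (a - 2 * ((a + 1) / (2 * b)) * b + (a + 1) / (2 * b) * ((a + 1) / (2 * b)) * 0)
      with (-1) in H by (field; lra). lra.
  - specialize (H (b / c)).
    replace (a - 2 * (b / c) * b + b / c * (b / c) * c) with ((a * c - b * b) / c) in H
      by (field; lra).
    assert (0 <= (a * c - b * b) / c * c) by (apply Rmult_le_pos; lra).
    replace ((a * c - b * b) / c * c) with (a * c - b * b) in H0 by (field; lra). lra.
Qed.

Lemma Rabs_le_between {a b : R} : Rabs a <= b -> - b <= a <= b.
Proof. unfold Rabs; destruct (Rcase_abs a); lra. Qed.

Lemma exp_le_exp x y : x <= y -> exp x <= exp y.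
Proof. intros [H | ->]; [apply Rlt_le, exp_increasing, H | apply Rle_refl]. Qed.

Lemma sqrt_add_le x y : 0 <= x -> 0 <= y -> sqrt (x + y) <= sqrt x + sqrt y.
Proof.
  intros Hx Hy. assert (Sx := sqrt_pos x). assert (Sy := sqrt_pos y).
  rewrite <- (sqrt_square (sqrt x + sqrt y)) by lra. apply sqrt_le_1_alt.
  rewrite <- (sqrt_sqrt x Hx) at 1. rewrite <- (sqrt_sqrt y Hy) at 1. nra.
Qed.

Lemma le_sqrt_of_sqr_le a b : 0 <= a -> a * a <= b -> a <= sqrt b.
Proof. intros Ha H. rewrite <- (sqrt_square a Ha). apply sqrt_le_1_alt, H. Qed.

Lemma quarter_bound {eps M x : R} : 0 < eps -> 0 <= x <= M -> eps / (4 * (M + 1)) * x <= eps / 4.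
Proof.
  intros He Hx. apply Rle_trans with (eps / (4 * (M + 1)) * (M + 1)).
  - apply Rmult_le_compat_l; [apply Rlt_le, Rdiv_lt_0_compat|]; lra.
  - right. field. lra.
Qed.

Lemma derivable_pt_lim_sqrt_comp {f : R -> R} {x l : R} : derivable_pt_lim f x l -> 0 < f x ->
  derivable_pt_lim (fun s => sqrt (f s)) x (l / (2 * sqrt (f x))).
Proof.
  intros H Hp. replace (l / (2 * sqrt (f x))) with (/ (2 * sqrt (f x)) * l) by (unfold Rdiv; ring).
  exact (derivable_pt_lim_comp f sqrt x l _ H (derivable_pt_lim_sqrt _ Hp)).
Qed.

Lemma derivable_pt_lim_exp_scal k x : derivable_pt_lim (fun s => exp (k * s)) x (k * exp (k * x)).
Proof.
  replace (k * exp (k * x)) with (exp (k * x) * (k * 1)) by ring.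
  apply (derivable_pt_lim_comp (fun s => k * s) exp).
  - apply derivable_pt_lim_scal, derivable_pt_lim_id.
  - apply derivable_pt_lim_exp.
Qed.

Lemma continuity_pt_exp_scal k x : continuity_pt (fun s => exp (k * s)) x.
Proof. apply derivable_continuous_pt. exists (k * exp (k * x)). apply derivable_pt_lim_exp_scal. Qed.

Lemma continuity_pt_intro (F : R -> R) t :
  (forall eps, 0 < eps -> exists d, 0 < d /\ forall s, Rabs (s - t) < d -> Rabs (F s - F t) < eps) ->
  continuity_pt F t.
Proof.
  intros H eps He. destruct (H eps He) as [d [Hd H1]]. exists d; split; [exact Hd|].
  intros s [_ Hs]. exact (H1 s Hs).
Qed.

Lemma mean_value_quotient (F F' : R -> R) t r h :
  (forall s, Rabs (s - t) < r -> derivable_pt_lim F s (F' s)) -> h <> 0 -> Rabs h < r ->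
  exists c, Rabs (c - t) < Rabs h /\ (F (t + h) - F t) / h = F' c.
Proof.
  intros HF Hh Hhr. apply Rabs_def2 in Hhr as Hr.
  destruct (Rlt_or_le 0 h) as [Hpos|Hneg].
  - destruct (MVT_cor2 F F' t (t + h)) as [c [Ec Hc]]; [lra| |].
    { intros c Hc. apply HF. apply Rabs_def1; lra. }
    exists c. rewrite (Rabs_right h) by lra. split; [apply Rabs_def1; lra|].
    rewrite Ec. field. exact Hh.
  - destruct (MVT_cor2 F F' (t + h) t) as [c [Ec Hc]]; [lra| |].
    { intros c Hc. apply HF. apply Rabs_def1; lra. }
    exists c. rewrite (Rabs_left h) by lra. split; [apply Rabs_def1; lra|].
    replace (F (t + h) - F t) with (- (F t - F (t + h))) by ring.
    rewrite Ec. field. exact Hh.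
Qed.

Lemma real_induction (a b : R) (P : R -> Prop) :
  (forall x, a <= x <= b -> (forall s, a <= s < x -> P s) -> P x) ->
  (forall x, a <= x < b -> P x -> exists y, x < y /\ forall s, x < s <= y -> P s) ->
  forall x, a <= x <= b -> P x.
Proof.
  intros Hclosed Hstep x Hx.
  set (Q := fun t => a <= t <= b /\ forall s, a <= s <= t -> P s).
  assert (Qa : Q a).
  { split; [lra|]. intros s Hs. replace s with a by lra.
    apply Hclosed; [lra | intros; lra]. }
  destruct (completeness Q) as [m [Hub Hlub]];
    [exists b; intros y [Hy _]; lra | exists a; exact Qa|].
  assert (Hm : a <= m <= b) by (split; [apply Hub, Qa | apply Hlub; intros y [Hy _]; lra]).
  assert (Hbelow : forall s, a <= s < m -> P s).
  { intros s Hs. apply NNPP. intro Hn. assert (m <= s); [|lra].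
    apply Hlub. intros y [Hy Py]. apply Rnot_lt_le. intro Hys. apply Hn, Py. lra. }
  assert (Pm : P m) by (apply Hclosed; assumption).
  assert (Em : m = b).
  { apply NNPP. intro Hne. destruct (Hstep m ltac:(lra) Pm) as [y [Hy Py]].
    assert (Hy' : Q (Rmin y b)).
    { split; [split; [apply Rmin_glb; lra | apply Rmin_r]|].
      intros s Hs. destruct (Rlt_or_le s m) as [Hsm|Hsm]; [apply Hbelow; lra|].
      destruct (Req_dec s m) as [->|]; [exact Pm|]. apply Py.
      assert (Rmin y b <= y) by apply Rmin_l. lra. }
    assert (Rmin y b <= m) by (apply Hub, Hy'). assert (m < Rmin y b) by (apply Rmin_glb_lt; lra).
    lra. }
  destruct (Req_dec x b) as [->|]; [rewrite <- Em; exact Pm | apply Hbelow; lra].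
Qed.

Lemma continuity_pt_le_left (F : R -> R) a x c : a < x -> continuity_pt F x ->
  (forall s, a <= s < x -> c <= F s) -> c <= F x.
Proof.
  intros Hax Hc Hle. apply Rnot_lt_le. intro Hlt.
  destruct (Hc (c - F x)) as [d [Hd H]]; [lra|]. simpl in H. unfold R_dist, D_x, no_cond in H.
  set (s := Rmax a (x - d / 2)).
  assert (Hs : a <= s < x) by (split; [apply Rmax_l | apply Rmax_lub_lt; lra]).
  assert (Hsd : Rabs (s - x) < d) by (apply Rabs_def1; assert (x - d / 2 <= s) by apply Rmax_r; lra).
  assert (Hdist := H s (conj (conj I (Rgt_not_eq _ _ (proj2 Hs))) Hsd)).
  apply Rabs_def2 in Hdist. assert (Hcs := Hle s Hs). lra.
Qed.

Lemma nondecreasing_of_right_lower (phi : R -> R) T1 T2 : T1 <= T2 ->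
  (forall t, T1 <= t <= T2 -> continuity_pt phi t) ->
  (forall t, T1 <= t < T2 -> forall eps, 0 < eps -> exists h0, 0 < h0 /\
      forall h, 0 < h < h0 -> phi (t + h) >= phi t - eps * h) ->
  phi T1 <= phi T2.
Proof.
  intros H12 Hc Hd.
  assert (Hslack : forall eps, 0 < eps -> phi T1 <= phi T2 + eps * (T2 - T1 + 1)).
  { intros eps He.
    enough (H : phi T1 - eps <= phi T2 + eps * (T2 - T1)) by lra.
    apply (@real_induction T1 T2 (fun s => phi T1 - eps <= phi s + eps * (s - T1))); [| | lra].
    - intros x Hx Hbelow. destruct (Req_dec x T1) as [->|Hne]; [lra|].
      apply (@continuity_pt_le_left (fun s => phi s + eps * (s - T1)) T1); [lra| |exact Hbelow].
      apply continuity_pt_plus; [apply Hc, Hx|].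
      apply continuity_pt_mult; [apply continuity_pt_const; intros ? ?; reflexivity|].
      apply continuity_pt_minus; [apply derivable_continuous_pt, derivable_pt_id|].
      apply continuity_pt_const. intros ? ?. reflexivity.
    - intros x Hx Px. destruct (Hd x Hx eps He) as [h0 [Hh0 H]].
      exists (x + h0 / 2). split; [lra|]. intros s Hs.
      assert (Hxs := H (s - x) ltac:(lra)). replace (x + (s - x)) with s in Hxs by ring. lra. }
  apply Rle_plus_epsilon. intros e He.
  replace e with (e / (T2 - T1 + 1) * (T2 - T1 + 1)) by (field; lra).
  apply Hslack, Rdiv_lt_0_compat; lra.
Qed.

(* Since [exp (b h) >= 1 + b h], the claim holds unless the linear lower bound for [S1] is
   negative, and then [S0] itself is [O(e h)]. *)
Lemma exp_step_lower S0 S1 b e h : 0 <= b -> 0 <= S0 -> 0 <= S1 -> 0 < h ->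
  h * (2 * b + 1) < 1 -> (b * S0 + e) * b * h <= e ->
  S1 >= S0 - (b * S0 + e) * h -> S1 * exp (b * h) >= S0 - 2 * e * h.
Proof.
  intros Hb HS0 HS1 Hh Hsmall Hquad Hlin. assert (Hexp := exp_ineq1_le (b * h)).
  destruct (Rle_or_lt 0 (S0 - (b * S0 + e) * h)) as [Hpos|Hneg].
  - assert (S1 * exp (b * h) >= (S0 - (b * S0 + e) * h) * (1 + b * h))
      by (apply Rle_ge, Rmult_le_compat; nra).
    nra.
  - assert (0 <= S1 * exp (b * h)) by (apply Rmult_le_pos; [lra | apply Rlt_le, exp_pos]).
    nra.
Qed.

Lemma right_lower_exp_weight (S : R -> R) b t : 0 <= b -> 0 <= S t ->
  (forall e, 0 < e -> exists h0, 0 < h0 /\ forall h, 0 < h < h0 ->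
      0 <= S (t + h) /\ S (t + h) >= S t - (b * S t + e) * h) ->
  forall eps, 0 < eps -> exists h0, 0 < h0 /\ forall h, 0 < h < h0 ->
    S (t + h) * exp (b * (t + h)) >= S t * exp (b * t) - eps * h.
Proof.
  intros Hb HS0 H eps He.
  set (w := exp (b * t)). assert (Hw : 0 < w) by apply exp_pos.
  set (e := eps / (2 * w)). assert (Hee : 0 < e) by (apply Rdiv_lt_0_compat; lra).
  destruct (H e Hee) as [h1 [Hh1 Hh2]].
  set (M := (b * S t + e) * b + 1).
  assert (HM : 0 < M) by (assert (0 <= (b * S t + e) * b) by (apply Rmult_le_pos; nra); unfold M; lra).
  set (h0 := Rmin h1 (Rmin (/ (2 * b + 1)) (e / M))).
  exists h0. split;
    [repeat apply Rmin_pos; [lra | apply Rinv_0_lt_compat; lra | apply Rdiv_lt_0_compat; lra]|].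
  intros h Hh.
  assert (hh1 : h < h1) by (eapply Rlt_le_trans; [apply Hh | apply Rmin_l]).
  assert (hh2 : h * (2 * b + 1) < 1).
  { assert (h < / (2 * b + 1)) by (eapply Rlt_le_trans; [apply Hh | unfold h0;
      eapply Rle_trans; [apply Rmin_r | apply Rmin_l]]).
    apply Rmult_lt_compat_r with (r := 2 * b + 1) in H0; [|lra]. rewrite Rinv_l in H0; lra. }
  assert (hh3 : (b * S t + e) * b * h <= e).
  { assert (h < e / M) by (eapply Rlt_le_trans; [apply Hh | unfold h0;
      eapply Rle_trans; [apply Rmin_r | apply Rmin_r]]).
    apply Rmult_lt_compat_l with (r := M) in H0; [|lra].
    replace (M * (e / M)) with e in H0 by (field; lra). unfold M in H0. lra. }
  destruct (Hh2 h (conj (proj1 Hh) hh1)) as [HS1 HS2].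
  assert (Hstep := exp_step_lower Hb HS0 HS1 (proj1 Hh) hh2 hh3 HS2).
  rewrite Rmult_plus_distr_l, exp_plus. fold w.
  replace (eps * h) with (w * (2 * e * h)) by (unfold e; field; lra).
  apply Rle_ge. replace (S (t + h) * (w * exp (b * h))) with (w * (S (t + h) * exp (b * h))) by ring.
  replace (S t * w - w * (2 * e * h)) with (w * (S t - 2 * e * h)) by ring.
  apply Rmult_le_compat_l; lra.
Qed.

Lemma sqrt_weighted_le_of_approx (E0 E1 K w0 w1 : R) :
  0 <= E1 -> 0 < w0 -> 0 < w1 ->
  (forall eta, 0 < eta -> exists R0 R1, E0 <= R0 + eta /\ R1 <= E1 + eta /\
     (sqrt (R0 + eta) + K) * w0 <= (sqrt (R1 + eta) + K) * w1) ->
  (sqrt E0 + K) * w0 <= (sqrt E1 + K) * w1.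
Proof.
  intros HE1 Hw0 Hw1 H. apply Rle_plus_epsilon. intros z Hz.
  set (r := z / w1). assert (Hr : 0 < r) by (apply Rdiv_lt_0_compat; lra).
  destruct (H (r * r / 2)) as [R0 [R1 [H0 [H1 Hmono]]]]; [nra|].
  assert (S0 : sqrt E0 <= sqrt (R0 + r * r / 2)) by (apply sqrt_le_1_alt; lra).
  assert (S1 : sqrt (R1 + r * r / 2) <= sqrt E1 + r).
  { rewrite <- (sqrt_square r) at 3 by lra.
    eapply Rle_trans; [apply sqrt_le_1_alt with (y := E1 + r * r) | apply sqrt_add_le]; nra. }
  assert ((sqrt E0 + K) * w0 <= (sqrt (R0 + r * r / 2) + K) * w0) by (apply Rmult_le_compat_r; lra).
  assert ((sqrt (R1 + r * r / 2) + K) * w1 <= (sqrt E1 + r + K) * w1) by (apply Rmult_le_compat_r; lra).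
  assert (Hrw : r * w1 = z) by (unfold r; field; lra).
  nra.
Qed.

Lemma exp_weighted_lower_linear S0 S1 K k t h : 0 <= S0 + K ->
  (S0 + K) * exp (k * t) <= (S1 + K) * exp (k * (t + h)) ->
  S1 >= S0 - k * (S0 + K) * h.
Proof.
  intros HSK H. rewrite Rmult_plus_distr_l, exp_plus in H.
  assert (Hw := exp_pos (k * t)).
  assert (H1 : S0 + K <= (S1 + K) * exp (k * h)).
  { apply Rmult_le_reg_r with (exp (k * t)); [exact Hw|]. lra. }
  assert (Hinv : exp (k * h) * exp (- (k * h)) = 1)
    by (rewrite <- exp_plus, Rplus_opp_r; apply exp_0).
  assert (H2 : (S0 + K) * exp (- (k * h)) <= S1 + K).
  { apply Rmult_le_compat_r with (r := exp (- (k * h))) in H1; [|apply Rlt_le, exp_pos].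
    rewrite Rmult_assoc, Hinv, Rmult_1_r in H1. exact H1. }
  assert (H3 : (S0 + K) * (1 - k * h) <= (S0 + K) * exp (- (k * h))).
  { apply Rmult_le_compat_l; [exact HSK|]. assert (Hexp := exp_ineq1_le (- (k * h))). lra. }
  lra.
Qed.

Lemma rate_over_sqrt_nonneg D E a G eta : 0 < a -> 0 <= E -> 0 < eta -> 0 <= G ->
  D >= - a * E - 2 * G * sqrt E ->
  D / (2 * sqrt (E + eta)) + (sqrt (E + eta) + 2 * G / a) * (a / 2) >= 0.
Proof.
  intros Ha HE Heta HG HD.
  set (Sq := sqrt (E + eta)).
  assert (HSq : 0 < Sq) by (apply sqrt_lt_R0; lra).
  assert (HSq2 : Sq * Sq = E + eta) by (apply sqrt_sqrt; lra).
  assert (G * sqrt E <= G * Sq) by (apply Rmult_le_compat_l; [exact HG | apply sqrt_le_1_alt; lra]).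
  replace (D / (2 * Sq) + (Sq + 2 * G / a) * (a / 2)) with ((D + a * (Sq * Sq) + 2 * G * Sq) / (2 * Sq))
    by (field; lra).
  apply Rle_ge, Rmult_le_pos; [|apply Rlt_le, Rinv_0_lt_compat; lra].
  assert (0 <= a * eta) by (apply Rmult_le_pos; lra).
  rewrite HSq2. lra.
Qed.

Lemma cross_term_le delta a mu Y Z :
  0 < delta -> 4 * delta <= a -> 0 <= mu -> mu <= 4 * delta * (a - 4 * delta) ->
  0 <= Y -> 0 <= Z ->
  4 * delta * (Y * Y) + 2 * mu * (Y * Z) <= a * (Y * Y) + a * mu * (Z * Z).
Proof.
  intros Hd Ha Hmu Hmua HY HZ.
  assert (K1 : 8 * delta * mu * (Y * Z) <= mu * (Y * Y) + 16 * delta * delta * mu * (Z * Z)).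
  { assert (0 <= mu * ((Y - 4 * delta * Z) * (Y - 4 * delta * Z)))
      by (apply Rmult_le_pos; [lra | apply Rle_0_sqr]).
    nra. }
  apply Rmult_le_reg_l with (4 * delta); [lra|].
  assert (HYY : 0 <= Y * Y) by nra. assert (HZZ : 0 <= Z * Z) by nra.
  assert (mu * (Y * Y) <= 4 * delta * ((a - 4 * delta) * (Y * Y)))
    by (rewrite <- (Rmult_assoc (4 * delta)); apply Rmult_le_compat_r; assumption).
  assert (16 * delta * delta * mu * (Z * Z) <= 4 * delta * (a * mu * (Z * Z))).
  { replace (16 * delta * delta * mu * (Z * Z)) with (4 * delta * (4 * delta * (mu * (Z * Z)))) by ring.
    replace (a * mu * (Z * Z)) with (a * (mu * (Z * Z))) by ring.
    apply Rmult_le_compat_l; [lra|]. apply Rmult_le_compat_r; [apply Rmult_le_pos|]; lra. }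
  lra.
Qed.

Lemma eq0_of_sqrt_mul_exp_le0 {x k : R} : 0 <= x -> sqrt x * exp k <= 0 -> x = 0.
Proof.
  intros Hx H. assert (HS := sqrt_pos x). assert (Hw := exp_pos k).
  assert (sqrt x = 0) by nra. rewrite <- (sqrt_sqrt x Hx). nra.
Qed.

Lemma Rpower_gt0 x y : 0 < Rpower x y.
Proof. apply exp_pos. Qed.

Lemma rpow_superlinear_le x M p : 0 <= x <= M -> 0 < M -> 0 < p ->
  rpow x (1 + p) <= Rpower M p * x.
Proof.
  intros Hx HM Hp. unfold rpow. destruct (Rle_dec x 0).
  - replace x with 0 by lra. lra.
  - rewrite Rpower_plus, Rpower_1, (Rmult_comm (Rpower M p)) by lra.
    apply Rmult_le_compat_l; [lra | apply Rle_Rpower_l; lra].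
Qed.

Lemma superlinear_factor_small K0 p q mu eps : 0 <= K0 -> 0 < p -> 0 < q -> 0 < mu -> 0 < eps ->
  exists theta, 0 < theta /\ K0 * (Rpower theta p / sqrt mu + Rpower theta q) <= eps.
Proof.
  intros HK0 Hp Hq Hmu He. assert (Hs : 0 < sqrt mu) by (apply sqrt_lt_R0, Hmu).
  set (eta := eps / (K0 * (/ sqrt mu + 1) + 1)).
  assert (Hden : 0 < K0 * (/ sqrt mu + 1) + 1).
  { assert (0 < / sqrt mu) by (apply Rinv_0_lt_compat, Hs).
    assert (0 <= K0 * (/ sqrt mu + 1)) by (apply Rmult_le_pos; lra). lra. }
  assert (Heta : 0 < eta) by (apply Rdiv_lt_0_compat; lra).
  assert (Hroot : forall r, 0 < r -> Rpower (Rpower eta (/ r)) r = eta).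
  { intros r Hr. rewrite Rpower_mult, Rinv_l, Rpower_1 by lra. reflexivity. }
  set (theta := Rmin (Rpower eta (/ p)) (Rpower eta (/ q))).
  assert (Hth : 0 < theta) by (apply Rmin_pos; apply Rpower_gt0).
  assert (Hthp : Rpower theta p <= eta).
  { rewrite <- (Hroot p Hp). apply Rle_Rpower_l; [lra | split; [exact Hth | apply Rmin_l]]. }
  assert (Hthq : Rpower theta q <= eta).
  { rewrite <- (Hroot q Hq). apply Rle_Rpower_l; [lra | split; [exact Hth | apply Rmin_r]]. }
  exists theta. split; [exact Hth|].
  apply Rle_trans with (K0 * (eta * / sqrt mu + eta)).
  - apply Rmult_le_compat_l; [exact HK0|]. unfold Rdiv.
    apply Rplus_le_compat; [apply Rmult_le_compat_r; [apply Rlt_le, Rinv_0_lt_compat|]|]; assumption.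
  - replace (K0 * (eta * / sqrt mu + eta)) with (eta * (K0 * (/ sqrt mu + 1))) by ring.
    assert (eta * (K0 * (/ sqrt mu + 1) + 1) = eps)
      by (unfold eta, Rdiv; rewrite Rmult_assoc, Rinv_l by lra; apply Rmult_1_r).
    assert (0 <= eta) by lra. nra.
Qed.

(** * Inner product spaces *)

Section InnerAlgebra.
Context {X : RHilbert}.
Implicit Types x y z : X.

Lemma inner_add_r x y z : hinner x (hadd y z) = hinner x y + hinner x z.
Proof. rewrite hinner_sym, hinner_add_l, (hinner_sym _ y), (hinner_sym _ z); ring. Qed.

Lemma inner_scal_r (a : R) x y : hinner x (hscal a y) = a * hinner x y.
Proof. rewrite hinner_sym, hinner_scal_l, (hinner_sym _ y); ring. Qed.

Lemma inner_zero_l y : hinner (@hzero X) y = 0.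
Proof. assert (H := hinner_add_l X hzero hzero y). rewrite hadd_0 in H. lra. Qed.

Lemma inner_zero_r y : hinner y (@hzero X) = 0.
Proof. rewrite hinner_sym; apply inner_zero_l. Qed.

Lemma inner_opp_l x y : hinner (hopp x) y = - hinner x y.
Proof.
  assert (H := hinner_add_l X x (hopp x) y). rewrite hadd_opp, inner_zero_l in H. lra.
Qed.

Lemma inner_opp_r x y : hinner x (hopp y) = - hinner x y.
Proof. rewrite hinner_sym, inner_opp_l, hinner_sym; ring. Qed.

Lemma inner_sub_l x y z : hinner (hsub x y) z = hinner x z - hinner y z.
Proof. unfold hsub. rewrite hinner_add_l, inner_opp_l; ring. Qed.

Lemma inner_sub_r x y z : hinner z (hsub x y) = hinner z x - hinner z y.
Proof. rewrite hinner_sym, inner_sub_l, !(hinner_sym _ z); ring. Qed.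

End InnerAlgebra.

Ltac inner_simpl := repeat rewrite ?inner_sub_l, ?inner_sub_r, ?hinner_add_l, ?inner_add_r,
  ?hinner_scal_l, ?inner_scal_r, ?inner_opp_l, ?inner_opp_r, ?inner_zero_l, ?inner_zero_r.

Tactic Notation "inner_simpl" "in" hyp(H) :=
  repeat rewrite ?inner_sub_l, ?inner_sub_r, ?hinner_add_l, ?inner_add_r,
  ?hinner_scal_l, ?inner_scal_r, ?inner_opp_l, ?inner_opp_r, ?inner_zero_l, ?inner_zero_r in H.

Section InnerProductSpace.
Context {X : RHilbert}.
Implicit Types x y z w : X.

Lemma hsub_eq0 x y : hsub x y = hzero -> x = y.
Proof.
  unfold hsub; intro H.
  assert (Hc : hadd (hopp y) y = hzero) by (rewrite hadd_comm; apply hadd_opp).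
  rewrite <- (hadd_0 X x), <- Hc, hadd_assoc, H, hadd_comm, hadd_0. reflexivity.
Qed.

Lemma inner_ext x y : (forall w, hinner x w = hinner y w) -> x = y.
Proof. intro H. apply hsub_eq0, hinner_def. inner_simpl. rewrite !H. ring. Qed.

Lemma hopp_scal x : hopp x = hscal (-1) x.
Proof. apply inner_ext. intro w. inner_simpl. ring. Qed.

Lemma hnorm_ge0 x : 0 <= hnorm x.
Proof. apply sqrt_pos. Qed.

Lemma hnorm_sqr x : hnorm x * hnorm x = hinner x x.
Proof. apply sqrt_sqrt, hinner_pos. Qed.

Lemma hnorm_pow2 x : hnorm x ^ 2 = hinner x x.
Proof. rewrite <- hnorm_sqr. ring. Qed.

Lemma hnorm_eq0 x : hnorm x = 0 -> x = hzero.
Proof. intro H. apply hinner_def. rewrite <- hnorm_sqr, H. ring. Qed.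

Lemma Cauchy_Schwarz x y : Rabs (hinner x y) <= hnorm x * hnorm y.
Proof.
  unfold hnorm. rewrite <- sqrt_mult by apply hinner_pos.
  rewrite <- sqrt_Rsqr_abs. apply sqrt_le_1_alt. unfold Rsqr.
  apply quadratic_nonneg_discr; [apply hinner_pos|]. intro t.
  assert (H := hinner_pos X (hsub x (hscal t y))). inner_simpl in H.
  rewrite (hinner_sym _ y x) in H. nra.
Qed.

Lemma hnorm_le_dual x (K : R) :
  0 <= K -> (forall w, Rabs (hinner x w) <= K * hnorm w) -> hnorm x <= K.
Proof.
  intros HK H. specialize (H x). rewrite Rabs_right, <- hnorm_sqr in H by apply Rle_ge, hinner_pos.
  assert (Hn := hnorm_ge0 x). destruct (Req_dec (hnorm x) 0); nra.
Qed.

Lemma hnorm_le_add_sub x y : hnorm x <= hnorm y + hnorm (hsub x y).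
Proof.
  apply hnorm_le_dual; [assert (H1 := hnorm_ge0 y); assert (H2 := hnorm_ge0 (hsub x y)); lra|].
  intro w. replace (hinner x w) with (hinner y w + hinner (hsub x y) w) by (inner_simpl; ring).
  eapply Rle_trans; [apply Rabs_triang|]. rewrite Rmult_plus_distr_r.
  apply Rplus_le_compat; apply Cauchy_Schwarz.
Qed.

Lemma dnorm_eq (B : X -> X) x : dnorm B x = sqrt (hinner x x + hinner (B x) (B x)).
Proof. unfold dnorm. rewrite !hnorm_pow2. reflexivity. Qed.

Lemma dnorm_sqr (B : X -> X) x : dnorm B x * dnorm B x = hinner x x + hinner (B x) (B x).
Proof.
  rewrite dnorm_eq. apply sqrt_sqrt.
  assert (H1 := hinner_pos X x). assert (H2 := hinner_pos X (B x)). lra.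
Qed.

Lemma dnorm_ge0 (B : X -> X) x : 0 <= dnorm B x.
Proof. apply sqrt_pos. Qed.

Lemma dnorm_ge (B : X -> X) x : hnorm x <= dnorm B x /\ hnorm (B x) <= dnorm B x.
Proof.
  rewrite dnorm_eq. assert (H1 := hinner_pos X x). assert (H2 := hinner_pos X (B x)).
  split; apply sqrt_le_1_alt; lra.
Qed.

End InnerProductSpace.

(** * Calculus of Hilbert-valued functions *)

Section VectorCalculus.
Context {X : RHilbert}.
Implicit Types f g : R -> X.

Definition hcont_at f (t : R) : Prop :=
  forall eps, 0 < eps -> exists d, 0 < d /\
    forall s, Rabs (s - t) < d -> hnorm (hsub (f s) (f t)) <= eps.

Definition hderiv_at f (v : X) (t : R) : Prop :=
  forall eps, 0 < eps -> exists d, 0 < d /\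
    forall h, h <> 0 -> Rabs h < d ->
      hnorm (hsub (hscal (/ h) (hsub (f (t + h)) (f t))) v) <= eps.

Lemma Rabs_inner_le {x : X} {eps : R} (w : X) : hnorm x <= eps -> Rabs (hinner x w) <= eps * hnorm w.
Proof.
  intro H. eapply Rle_trans; [apply Cauchy_Schwarz|].
  apply Rmult_le_compat_r; [apply hnorm_ge0 | exact H].
Qed.

Lemma diff_quotient_inner f v t h w : h <> 0 ->
  hinner (hsub (hscal (/ h) (hsub (f (t + h)) (f t))) v) w =
  (hinner (f (t + h)) w - hinner (f t) w) / h - hinner v w.
Proof. intro Hh. inner_simpl. unfold Rdiv. ring. Qed.

Lemma hderiv_at_inner f v t : hderiv_at f v t ->
  forall eps, 0 < eps -> exists d, 0 < d /\ forall h, h <> 0 -> Rabs h < d -> forall w,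
    Rabs ((hinner (f (t + h)) w - hinner (f t) w) / h - hinner v w) <= eps * hnorm w.
Proof.
  intros Hf eps He. destruct (Hf eps He) as [d [Hd H]]. exists d; split; [exact Hd|].
  intros h Hh Hhd w. rewrite <- diff_quotient_inner by exact Hh. apply Rabs_inner_le; auto.
Qed.

Lemma hderiv_at_of_inner f v t :
  (forall eps, 0 < eps -> exists d, 0 < d /\ forall h, h <> 0 -> Rabs h < d -> forall w,
    Rabs ((hinner (f (t + h)) w - hinner (f t) w) / h - hinner v w) <= eps * hnorm w) ->
  hderiv_at f v t.
Proof.
  intros Hf eps He. destruct (Hf eps He) as [d [Hd H]]. exists d; split; [exact Hd|].
  intros h Hh Hhd. apply hnorm_le_dual; [lra|]. intro w.
  rewrite diff_quotient_inner by exact Hh. auto.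
Qed.

Lemma hcont_at_of_inner f t :
  (forall eps, 0 < eps -> exists d, 0 < d /\ forall s, Rabs (s - t) < d -> forall w,
    Rabs (hinner (f s) w - hinner (f t) w) <= eps * hnorm w) ->
  hcont_at f t.
Proof.
  intros Hf eps He. destruct (Hf eps He) as [d [Hd H]]. exists d; split; [exact Hd|].
  intros s Hs. apply hnorm_le_dual; [lra|]. intro w. rewrite inner_sub_l. auto.
Qed.

Lemma Rabs_lt_min_pos h d t : Rabs h < Rmin d t -> Rabs h < d /\ 0 < t + h.
Proof.
  intro H. split; [eapply Rlt_le_trans; [exact H | apply Rmin_l]|].
  assert (Rabs h < t) by (eapply Rlt_le_trans; [exact H | apply Rmin_r]).
  apply Rabs_def2 in H0. lra.
Qed.

Lemma hcont_pos_at f t : hcont_pos f -> 0 < t -> hcont_at f t.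
Proof.
  intros H Ht eps He. destruct (H t (Rlt_le _ _ Ht) eps He) as [d [Hd H1]].
  exists (Rmin d t); split; [apply Rmin_pos; lra|].
  intros s Hs. destruct (Rabs_lt_min_pos _ _ _ Hs) as [Hsd Hpos].
  apply Rlt_le, H1; [lra | exact Hsd].
Qed.

Lemma hderiv_pos_at f v t : hderiv_pos f v t -> 0 < t -> hderiv_at f v t.
Proof.
  intros H Ht eps He. destruct (H eps He) as [d [Hd H1]].
  exists (Rmin d t); split; [apply Rmin_pos; lra|].
  intros h Hh Hhd. destruct (Rabs_lt_min_pos _ _ _ Hhd). apply Rlt_le, H1; auto; lra.
Qed.

Lemma hcont_at_add f g t : hcont_at f t -> hcont_at g t ->
  hcont_at (fun s => hadd (f s) (g s)) t.
Proof.
  intros Hf Hg. apply hcont_at_of_inner. intros eps He.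
  destruct (Hf (eps / 2)) as [d1 [Hd1 H1]]; [lra|].
  destruct (Hg (eps / 2)) as [d2 [Hd2 H2]]; [lra|].
  exists (Rmin d1 d2); split; [apply Rmin_pos; lra|]. intros s Hs w.
  assert (Hs1 : Rabs (s - t) < d1) by (eapply Rlt_le_trans; [apply Hs | apply Rmin_l]).
  assert (Hs2 : Rabs (s - t) < d2) by (eapply Rlt_le_trans; [apply Hs | apply Rmin_r]).
  assert (B1 := Rabs_inner_le w (H1 s Hs1)). assert (B2 := Rabs_inner_le w (H2 s Hs2)).
  inner_simpl. inner_simpl in B1. inner_simpl in B2.
  replace (hinner (f s) w + hinner (g s) w - (hinner (f t) w + hinner (g t) w))
    with ((hinner (f s) w - hinner (f t) w) + (hinner (g s) w - hinner (g t) w)) by ring.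
  eapply Rle_trans; [apply Rabs_triang | lra].
Qed.

Lemma hcont_at_scal f k t : hcont_at f t -> hcont_at (fun s => hscal k (f s)) t.
Proof.
  intros Hf eps He.
  assert (Hk : 0 < Rabs k + 1) by (assert (H := Rabs_pos k); lra).
  destruct (Hf (eps / (Rabs k + 1))) as [d [Hd H]]; [apply Rdiv_lt_0_compat; lra|].
  exists d; split; [exact Hd|]. intros s Hs. specialize (H s Hs).
  apply hnorm_le_dual; [lra|]. intro w.
  assert (B := Rabs_inner_le w H). inner_simpl. inner_simpl in B.
  rewrite <- Rmult_minus_distr_l, Rabs_mult.
  apply Rle_trans with ((Rabs k + 1) * (eps / (Rabs k + 1) * hnorm w)).
  - apply Rmult_le_compat; try apply Rabs_pos; [lra | exact B].
  - right. field. lra.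
Qed.

Lemma hcont_at_sub f g t : hcont_at f t -> hcont_at g t ->
  hcont_at (fun s => hsub (f s) (g s)) t.
Proof.
  intros Hf Hg.
  replace (fun s => hsub (f s) (g s)) with (fun s => hadd (f s) (hscal (-1) (g s)))
    by (apply functional_extensionality; intro s; unfold hsub; rewrite hopp_scal; reflexivity).
  apply hcont_at_add, hcont_at_scal; assumption.
Qed.

Section SelfAdjointContraction.
Variable L : X -> X.
Hypothesis L_sym : forall x w, hinner (L x) w = hinner x (L w).
Hypothesis L_contr : forall w, hnorm (L w) <= hnorm w.

Lemma hcont_at_map f t : hcont_at f t -> hcont_at (fun s => L (f s)) t.
Proof.
  intros Hf. apply hcont_at_of_inner. intros eps He.
  destruct (Hf eps He) as [d [Hd H]]. exists d; split; [exact Hd|].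
  intros s Hs w. rewrite !L_sym, <- inner_sub_l.
  eapply Rle_trans; [apply (Rabs_inner_le (L w) (H s Hs))|].
  apply Rmult_le_compat_l; [lra | apply L_contr].
Qed.

Lemma hderiv_at_map f v t : hderiv_at f v t -> hderiv_at (fun s => L (f s)) (L v) t.
Proof.
  intros Hf. apply hderiv_at_of_inner. intros eps He.
  destruct (hderiv_at_inner Hf He) as [d [Hd H]]. exists d; split; [exact Hd|].
  intros h Hh Hhd w. rewrite !L_sym. eapply Rle_trans; [apply H; auto|].
  apply Rmult_le_compat_l; [lra | apply L_contr].
Qed.

End SelfAdjointContraction.

Lemma inner_diff_quotient (F0 F1 G0 G1 a b : X) h : h <> 0 ->
  (hinner F1 G1 - hinner F0 G0) / h - (hinner a G0 + hinner F0 b) =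
  hinner (hsub (hscal (/ h) (hsub F1 F0)) a) G1 + hinner a (hsub G1 G0)
  + hinner F0 (hsub (hscal (/ h) (hsub G1 G0)) b).
Proof. intro Hh. inner_simpl. field. exact Hh. Qed.

Lemma derivable_pt_lim_inner f g a b t :
  hderiv_at f a t -> hderiv_at g b t -> hcont_at g t ->
  derivable_pt_lim (fun s => hinner (f s) (g s)) t (hinner a (g t) + hinner (f t) b).
Proof.
  intros Hf Hg Hc eps He.
  set (NG := hnorm (g t)). set (Na := hnorm a). set (NF := hnorm (f t)).
  assert (HNG : 0 <= NG) by apply hnorm_ge0. assert (HNa : 0 <= Na) by apply hnorm_ge0.
  assert (HNF : 0 <= NF) by apply hnorm_ge0.
  destruct (Hf (eps / (4 * (NG + 1 + 1)))) as [d1 [Hd1 H1]]; [apply Rdiv_lt_0_compat; lra|].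
  destruct (Hg (eps / (4 * (NF + 1)))) as [d3 [Hd3 H3]]; [apply Rdiv_lt_0_compat; lra|].
  destruct (Hc (Rmin 1 (eps / (4 * (Na + 1))))) as [d2 [Hd2 H2]];
    [apply Rmin_pos; [|apply Rdiv_lt_0_compat]; lra|].
  assert (Hd : 0 < Rmin d1 (Rmin d2 d3)) by (repeat apply Rmin_pos; lra).
  exists (mkposreal _ Hd). simpl. intros h Hh Hhd.
  assert (hd1 : Rabs h < d1) by (eapply Rlt_le_trans; [apply Hhd | apply Rmin_l]).
  assert (hd2 : Rabs (t + h - t) < d2).
  { replace (t + h - t) with h by ring.
    eapply Rlt_le_trans; [apply Hhd | eapply Rle_trans; [apply Rmin_r | apply Rmin_l]]. }
  assert (hd3 : Rabs h < d3).
  { eapply Rlt_le_trans; [apply Hhd | eapply Rle_trans; [apply Rmin_r | apply Rmin_r]]. }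
  specialize (H1 h Hh hd1). specialize (H2 _ hd2). specialize (H3 h Hh hd3).
  assert (Hmin1 := Rmin_l 1 (eps / (4 * (Na + 1)))).
  assert (Hmin2 := Rmin_r 1 (eps / (4 * (Na + 1)))).
  assert (HG1 : hnorm (g (t + h)) <= NG + 1)
    by (assert (H := hnorm_le_add_sub (g (t + h)) (g t)); unfold NG; lra).
  rewrite inner_diff_quotient by exact Hh.
  assert (B1 : Rabs (hinner (hsub (hscal (/ h) (hsub (f (t + h)) (f t))) a) (g (t + h))) <= eps / 4).
  { eapply Rle_trans; [apply (Rabs_inner_le _ H1)|].
    apply quarter_bound; [exact He | split; [apply hnorm_ge0 | exact HG1]]. }
  assert (B2 : Rabs (hinner a (hsub (g (t + h)) (g t))) <= eps / 4).
  { rewrite hinner_sym. eapply Rle_trans; [apply (Rabs_inner_le a H2)|].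
    apply Rle_trans with (eps / (4 * (Na + 1)) * Na);
      [apply Rmult_le_compat_r; assumption | exact (quarter_bound He (conj HNa (Rle_refl Na)))]. }
  assert (B3 : Rabs (hinner (f t) (hsub (hscal (/ h) (hsub (g (t + h)) (g t))) b)) <= eps / 4).
  { rewrite hinner_sym. eapply Rle_trans; [apply (Rabs_inner_le (f t) H3)|].
    exact (quarter_bound He (conj HNF (Rle_refl NF))). }
  eapply Rle_lt_trans; [apply Rabs_triang|].
  eapply Rle_lt_trans; [apply Rplus_le_compat_r, Rabs_triang|]. lra.
Qed.

Lemma continuity_pt_inner f g t : hcont_at f t -> hcont_at g t ->
  continuity_pt (fun s => hinner (f s) (g s)) t.
Proof.
  intros Hf Hg. apply continuity_pt_intro. intros eps He.
  set (NG := hnorm (g t)). set (NF := hnorm (f t)).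
  assert (HNG : 0 <= NG) by apply hnorm_ge0. assert (HNF : 0 <= NF) by apply hnorm_ge0.
  destruct (Hf (eps / (4 * (NG + 1 + 1)))) as [d1 [Hd1 H1]]; [apply Rdiv_lt_0_compat; lra|].
  destruct (Hg (Rmin 1 (eps / (4 * (NF + 1))))) as [d2 [Hd2 H2]];
    [apply Rmin_pos; [|apply Rdiv_lt_0_compat]; lra|].
  exists (Rmin d1 d2); split; [apply Rmin_pos; lra|]. intros s Hs.
  assert (Hs1 : Rabs (s - t) < d1) by (eapply Rlt_le_trans; [apply Hs | apply Rmin_l]).
  assert (Hs2 : Rabs (s - t) < d2) by (eapply Rlt_le_trans; [apply Hs | apply Rmin_r]).
  specialize (H1 s Hs1). specialize (H2 s Hs2).
  assert (Hmin1 := Rmin_l 1 (eps / (4 * (NF + 1)))).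
  assert (Hmin2 := Rmin_r 1 (eps / (4 * (NF + 1)))).
  assert (HG : hnorm (g s) <= NG + 1) by (assert (H := hnorm_le_add_sub (g s) (g t)); unfold NG; lra).
  assert (B1 : Rabs (hinner (hsub (f s) (f t)) (g s)) <= eps / 4).
  { eapply Rle_trans; [apply (Rabs_inner_le _ H1)|].
    apply quarter_bound; [exact He | split; [apply hnorm_ge0 | exact HG]]. }
  assert (B2 : Rabs (hinner (f t) (hsub (g s) (g t))) <= eps / 4).
  { rewrite hinner_sym. eapply Rle_trans; [apply (Rabs_inner_le (f t) H2)|].
    apply Rle_trans with (eps / (4 * (NF + 1)) * NF);
      [apply Rmult_le_compat_r; assumption | exact (quarter_bound He (conj HNF (Rle_refl NF)))]. }
  replace (hinner (f s) (g s) - hinner (f t) (g t)) with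
    (hinner (hsub (f s) (f t)) (g s) + hinner (f t) (hsub (g s) (g t))) by (inner_simpl; ring).
  eapply Rle_lt_trans; [apply Rabs_triang | lra].
Qed.

Lemma hderiv_at_of_weak f v t r : 0 < r ->
  (forall s, Rabs (s - t) < r -> forall w,
     derivable_pt_lim (fun z => hinner (f z) w) s (hinner (v s) w)) ->
  hcont_at v t -> hderiv_at f (v t) t.
Proof.
  intros Hr Hd Hc. apply hderiv_at_of_inner. intros eps He.
  destruct (Hc eps He) as [d [Hd0 H1]].
  exists (Rmin d r); split; [apply Rmin_pos; lra|]. intros h Hh Hhd w.
  assert (hd : Rabs h < d) by (eapply Rlt_le_trans; [apply Hhd | apply Rmin_l]).
  assert (hr : Rabs h < r) by (eapply Rlt_le_trans; [apply Hhd | apply Rmin_r]).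
  destruct (@mean_value_quotient _ _ _ _ _ (fun s Hs => Hd s Hs w) Hh hr) as [c [Hct ->]].
  rewrite <- inner_sub_l. apply Rabs_inner_le, H1. lra.
Qed.

Lemma hcont_pos_zero_at0 f : hcont_pos f -> (forall t, 0 < t -> f t = hzero) -> f 0 = hzero.
Proof.
  intros Hf H0. apply hnorm_eq0, Rle_antisym; [|apply hnorm_ge0].
  apply Rle_plus_epsilon. intros eps He. rewrite Rplus_0_l.
  destruct (Hf 0 (Rle_refl 0) eps He) as [d [Hd H]].
  assert (Hs := H (d / 2) ltac:(lra) ltac:(rewrite Rminus_0_r, Rabs_right; lra)).
  rewrite (H0 (d / 2)) in Hs by lra.
  replace (hnorm (hsub hzero (f 0))) with (hnorm (f 0)) in Hs
    by (unfold hnorm; f_equal; inner_simpl; ring).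
  lra.
Qed.

End VectorCalculus.

(** * The regularizing resolvent *)

Lemma linear_on_sub {X : RHilbert} {D : X -> Prop} {L : X -> X} {a b : X} :
  is_subspace D -> linear_on D L -> D a -> D b ->
  D (hsub a b) /\ L (hsub a b) = hsub (L a) (L b).
Proof.
  intros [_ [Hadd Hsc]] [La Ls] Ha Hb. unfold hsub. rewrite !hopp_scal.
  split; [apply Hadd; auto | rewrite La, Ls; auto].
Qed.

Section Operator.
Context {X : RHilbert}.
Variables (DA : X -> Prop) (A : X -> X) (DB : X -> Prop) (B : X -> X).
Hypothesis HA : nonneg_self_adjoint DA A.
Hypothesis HB : is_sqrt_op DA A DB B.
Hypothesis Hspec : discrete_point_spectrum DA A.

Lemma sqrt_op_domain x : DA x -> DB x.
Proof. destruct HB as [_ [Hd _]]. intro Dx. apply Hd, Dx. Qed.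

Lemma sqrt_op_form x y : DB x -> DA y -> hinner (B x) (B y) = hinner x (A y).
Proof.
  destruct HB as [[_ [_ [_ [Hsym _]]]] [Hd Hsq]]. intros Dx Dy.
  destruct (proj1 (Hd y) Dy) as [D1 D2]. rewrite Hsym, Hsq; auto.
Qed.

Lemma sqrt_op_energy z : DA z -> hinner (A z) z = hinner (B z) (B z).
Proof.
  intro Dz. rewrite hinner_sym, <- sqrt_op_form; [reflexivity | apply sqrt_op_domain |]; exact Dz.
Qed.

(* [Jres c] is [c (A + c)^-1]: [-c] is not an eigenvalue of [A >= 0], hence lies in the
   resolvent set since the spectrum consists of eigenvalues. *)
Definition is_Jres (c : R) (w x : X) : Prop := DA x /\ A x = hscal c (hsub w x).

Definition Jres (c : R) (w : X) : X := epsilon (inhabits (@hzero X)) (is_Jres c w).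

Section FixedParameter.
Variable c : R.
Hypothesis Hc : 0 < c.

Lemma Jres_exists w : exists x, is_Jres c w x.
Proof.
  destruct Hspec as [Heig _]. destruct HA as [_ [_ [_ [_ [_ Hnn]]]]].
  assert (Hr : in_resolvent DA A (- c)).
  { apply NNPP. intro Hn. destruct (Heig (- c) Hn) as [x [Dx [Hx0 Ax]]].
    apply Hx0, hinner_def. assert (H1 := Hnn x Dx). rewrite Ax in H1. inner_simpl in H1.
    assert (H2 := hinner_pos X x). nra. }
  destruct Hr as [Hsurj _]. destruct (Hsurj (hscal c w)) as [x [Dx Ex]].
  exists x. split; [exact Dx|]. apply inner_ext. intro v.
  assert (E := f_equal (fun z => hinner z v) Ex). simpl in E. inner_simpl in E. inner_simpl. lra.
Qed.

Lemma Jres_spec w : is_Jres c w (Jres c w).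
Proof. unfold Jres. apply epsilon_spec, Jres_exists. Qed.

Lemma Jres_domain w : DA (Jres c w).
Proof. apply Jres_spec. Qed.

Lemma Jres_eq w : A (Jres c w) = hscal c (hsub w (Jres c w)).
Proof. apply Jres_spec. Qed.

Lemma Jres_unique w x : is_Jres c w x -> x = Jres c w.
Proof.
  intros [Dx Ax]. destruct (Jres_spec w) as [Dy Ay]. set (y := Jres c w) in *.
  destruct HA as [Hsub [_ [Hlin [_ [_ Hnn]]]]].
  destruct (linear_on_sub Hsub Hlin Dx Dy) as [Dd Ad].
  apply hsub_eq0, hinner_def.
  assert (H1 := Hnn _ Dd). rewrite Ad, Ax, Ay in H1. inner_simpl in H1.
  assert (H2 := hinner_pos X (hsub x y)). inner_simpl in H2. inner_simpl.
  rewrite (hinner_sym _ y x), (hinner_sym _ w x), (hinner_sym _ w y) in *. nra.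
Qed.

Lemma Jres_sym w v : hinner (Jres c w) v = hinner w (Jres c v).
Proof.
  destruct HA as [_ [_ [_ [Hsym _]]]].
  assert (E := Hsym _ _ (Jres_domain w) (Jres_domain v)).
  rewrite !Jres_eq in E. inner_simpl in E.
  apply Rmult_eq_reg_l with c; lra.
Qed.

Lemma Jres_contr w : hnorm (Jres c w) <= hnorm w.
Proof.
  destruct HA as [_ [_ [_ [_ [_ Hnn]]]]].
  assert (H1 := Hnn _ (Jres_domain w)). rewrite Jres_eq in H1. inner_simpl in H1.
  set (x := Jres c w) in *.
  assert (H2 : hnorm x * hnorm x <= hinner w x) by (rewrite hnorm_sqr; nra).
  assert (H3 := Rle_abs (hinner w x)). assert (H4 := Cauchy_Schwarz w x).
  assert (Hx := hnorm_ge0 x). assert (Hw := hnorm_ge0 w).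
  destruct (Req_dec (hnorm x) 0); nra.
Qed.

Lemma Jres_sub_le y : DA y -> hnorm (hsub (Jres c y) y) <= hnorm (A y) / c.
Proof.
  intro Dy. destruct HA as [Hsub [_ [Hlin [_ [_ Hnn]]]]].
  destruct (linear_on_sub Hsub Hlin (Jres_domain y) Dy) as [Dd Ad].
  assert (H1 := Hnn _ Dd). rewrite Ad, Jres_eq in H1.
  set (d := hsub (Jres c y) y) in *.
  assert (H2 : c * (hnorm d * hnorm d) <= - hinner (A y) d).
  { rewrite hnorm_sqr. unfold d in *. inner_simpl in H1. inner_simpl.
    rewrite (hinner_sym _ y (Jres c y)) in *. lra. }
  assert (H3 := Cauchy_Schwarz (A y) d).
  assert (H4 : - hinner (A y) d <= Rabs (hinner (A y) d)) by (rewrite <- Rabs_Ropp; apply Rle_abs).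
  assert (Hd := hnorm_ge0 d). assert (Ha := hnorm_ge0 (A y)).
  apply Rmult_le_reg_l with c; [exact Hc|].
  replace (c * (hnorm (A y) / c)) with (hnorm (A y)) by (field; lra).
  destruct (Req_dec (hnorm d) 0) as [->|]; nra.
Qed.

Lemma Jres_sqrt_op x : DB x -> B (Jres c x) = Jres c (B x).
Proof.
  intro Dx. destruct HB as [[HsubB [_ [HlinB _]]] [Hd Hsq]].
  set (z := Jres c x). destruct (proj1 (Hd z) (Jres_domain x)) as [Dz1 Dz2].
  assert (Dcx : DB (hscal c x)) by (apply HsubB, Dx).
  assert (Dcz : DB (hscal c z)) by (apply HsubB, Dz1).
  destruct (linear_on_sub HsubB HlinB Dcx Dcz) as [DAz BAz].
  assert (EAz : A z = hsub (hscal c x) (hscal c z)).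
  { unfold z. rewrite Jres_eq. apply inner_ext. intro v. inner_simpl. ring. }
  rewrite <- EAz in DAz, BAz.
  assert (DAy : DA (B z)) by (apply Hd; split; [exact Dz2 | rewrite Hsq; auto; apply Jres_domain]).
  apply Jres_unique. split; [exact DAy|].
  rewrite <- (Hsq (B z) DAy), (Hsq z (Jres_domain x)), BAz.
  destruct HlinB as [_ Hls]. rewrite !Hls by auto. apply inner_ext. intro v. inner_simpl. ring.
Qed.

Lemma Jres_potential x : DB x ->
  c * hinner x (Jres c x) - c * hinner (Jres c x) (Jres c x) =
  hinner (Jres c (B x)) (Jres c (B x)).
Proof.
  intro Dx. rewrite <- Jres_sqrt_op, <- sqrt_op_energy by (exact Dx || apply Jres_domain).
  rewrite Jres_eq. inner_simpl. ring.
Qed.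

End FixedParameter.

Lemma Jres_converges w : forall eps, 0 < eps ->
  exists C, 0 < C /\ forall c, C <= c -> hnorm (hsub (Jres c w) w) <= eps.
Proof.
  intros eps He. destruct HA as [_ [Hden _]].
  destruct (Hden w (eps / 3)) as [y [Dy Hy]]; [lra|].
  assert (Ha := hnorm_ge0 (A y)).
  set (C := 3 * hnorm (A y) / eps + 1).
  assert (HC0 : 0 <= 3 * hnorm (A y) / eps)
    by (apply Rmult_le_pos; [lra | apply Rlt_le, Rinv_0_lt_compat; lra]).
  exists C; split; [unfold C; lra|]. intros c Hcc. assert (Hc : 0 < c) by (unfold C in Hcc; lra).
  assert (Hq : hnorm (A y) / c <= eps / 3).
  { apply Rmult_le_reg_l with (3 * c); [lra|].
    replace (3 * c * (hnorm (A y) / c)) with (3 * hnorm (A y)) by (field; lra).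
    replace (3 * c * (eps / 3)) with (c * eps) by field.
    replace (3 * hnorm (A y)) with (3 * hnorm (A y) / eps * eps) by (field; lra).
    apply Rmult_le_compat_r; unfold C in Hcc; lra. }
  assert (Hcl := Jres_sub_le Hc Dy).
  apply hnorm_le_dual; [lra|]. intro v.
  replace (hinner (hsub (Jres c w) w) v) with
    (hinner (hsub w y) (Jres c v) + hinner (hsub (Jres c y) y) v - hinner (hsub w y) v)
    by (inner_simpl; rewrite <- !(Jres_sym Hc); ring).
  assert (B1 : Rabs (hinner (hsub w y) (Jres c v)) <= eps / 3 * hnorm v).
  { eapply Rle_trans; [apply Cauchy_Schwarz|].
    apply Rmult_le_compat; try apply hnorm_ge0; [lra | apply Jres_contr, Hc]. }
  assert (B2 := Rabs_inner_le v (Rle_trans _ _ _ Hcl Hq)).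
  assert (B3 := Rabs_inner_le v (Rlt_le _ _ Hy)).
  unfold Rminus. eapply Rle_trans; [apply Rabs_triang|]. rewrite Rabs_Ropp.
  eapply Rle_trans; [apply Rplus_le_compat_r, Rabs_triang|]. lra.
Qed.

Lemma Jres_norm_converges w : forall eps, 0 < eps ->
  exists C, 0 < C /\ forall c, C <= c ->
    Rabs (hinner (Jres c w) (Jres c w) - hinner w w) <= eps.
Proof.
  intros eps He. assert (Hw := hnorm_ge0 w).
  set (r := Rmin 1 (eps / (1 + 2 * hnorm w))).
  assert (Hr : 0 < r) by (apply Rmin_pos; [lra | apply Rdiv_lt_0_compat; lra]).
  destruct (Jres_converges w Hr) as [C [HC H1]]. exists C; split; [exact HC|].
  intros c Hc. specialize (H1 c Hc). set (d := hsub (Jres c w) w) in *.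
  replace (hinner (Jres c w) (Jres c w) - hinner w w) with (hinner d d + 2 * hinner d w)
    by (unfold d; inner_simpl; rewrite (hinner_sym _ w (Jres c w)); ring).
  rewrite <- hnorm_sqr. eapply Rle_trans; [apply Rabs_triang|].
  assert (Hn := hnorm_ge0 d).
  rewrite Rabs_right by (apply Rle_ge, Rmult_le_pos; auto).
  rewrite Rabs_mult, (Rabs_right 2) by lra.
  assert (Hcs := Cauchy_Schwarz d w).
  assert (r1 : r <= 1) by apply Rmin_l.
  assert (r3 : r * (1 + 2 * hnorm w) <= eps).
  { apply Rle_trans with (eps / (1 + 2 * hnorm w) * (1 + 2 * hnorm w));
      [apply Rmult_le_compat_r; [lra | apply Rmin_r] | right; field; lra]. }
  nra.
Qed.

End Operator.

(** * Energy of a solution *)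

Section Solution.
Context {X : RHilbert}.
Variables (DA : X -> Prop) (A : X -> X) (DB : X -> Prop) (B : X -> X).
Hypothesis HA : nonneg_self_adjoint DA A.
Hypothesis HB : is_sqrt_op DA A DB B.
Hypothesis Hspec : discrete_point_spectrum DA A.

Variables (delta : R) (u du g : R -> X).
Hypothesis u_dom : forall t, 0 <= t -> DB (u t).
Hypothesis u_cont : hcont_pos u.
Hypothesis Bu_cont : hcont_pos (fun t => B (u t)).
Hypothesis u_deriv : forall t, 0 <= t -> hderiv_pos u (du t) t.
Hypothesis du_cont : hcont_pos du.
Hypothesis g_cont : hcont_pos g.
Hypothesis du_weak : forall v, DB v -> forall t, 0 < t ->
  derivable_pt_lim (fun s => hinner (du s) v) t
    (hinner (g t) v - 2 * delta * hinner (du t) v - hinner (B (u t)) (B v)).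

Local Notation J := (Jres DA A).

Definition energy (mu t : R) : R :=
  hinner (du t) (du t) + hinner (B (u t)) (B (u t)) + mu * hinner (u t) (u t).

(* The middle terms equal [|J c (B u)|^2] (Jres_potential), but unlike the latter they are
   differentiable in [t]; [reg_energy c mu] tends to [energy mu] as [c -> +oo]. *)
Definition reg_energy (c mu t : R) : R :=
  hinner (J c (du t)) (J c (du t)) + c * hinner (u t) (J c (u t))
  - c * hinner (J c (u t)) (J c (u t)) + mu * hinner (J c (u t)) (J c (u t)).

Definition reg_energy_rate (c mu t : R) : R :=
  2 * hinner (J c (g t)) (J c (du t)) - 4 * delta * hinner (J c (du t)) (J c (du t))
  + 2 * mu * hinner (J c (du t)) (J c (u t)).

Section FixedParameter.
Variable c : R.
Hypothesis Hc : 0 < c.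

Let J_sym w v : hinner (J c w) v = hinner w (J c v) := Jres_sym HA Hspec Hc w v.
Let J_contr w : hnorm (J c w) <= hnorm w := Jres_contr HA Hspec Hc w.
Let J_dom w : DA (J c w) := Jres_domain HA Hspec Hc w.
Let J_eq w : A (J c w) = hscal c (hsub w (J c w)) := Jres_eq HA Hspec Hc w.

Lemma Jdu_deriv t : 0 < t ->
  hderiv_at (fun s => J c (du s))
    (hadd (hsub (J c (g t)) (hscal (2 * delta) (J c (du t)))) (hscal c (hsub (J c (u t)) (u t)))) t.
Proof.
  intro Ht.
  apply hderiv_at_of_weak with
    (v := fun s => hadd (hsub (J c (g s)) (hscal (2 * delta) (J c (du s))))
                        (hscal c (hsub (J c (u s)) (u s)))) (r := t / 2); [lra| |].
  - intros s Hs w. apply Rabs_def2 in Hs.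
    replace (fun z => hinner (J c (du z)) w) with (fun z => hinner (du z) (J c w))
      by (apply functional_extensionality; intro; symmetry; apply J_sym).
    replace (hinner _ w) with (hinner (g s) (J c w) - 2 * delta * hinner (du s) (J c w)
                                - hinner (B (u s)) (B (J c w))).
    + apply du_weak; [apply (sqrt_op_domain HB), J_dom | lra].
    + rewrite (sqrt_op_form HB) by (auto; apply u_dom; lra).
      rewrite J_eq. inner_simpl. rewrite !J_sym, (hinner_sym _ (u s) (J c w)), J_sym. ring.
  - apply hcont_at_add; [apply hcont_at_sub|apply hcont_at_scal, hcont_at_sub].
    + apply hcont_at_map; auto. apply hcont_pos_at; auto.
    + apply hcont_at_scal, hcont_at_map; auto. apply hcont_pos_at; auto.
    + apply hcont_at_map; auto. apply hcont_pos_at; auto.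
    + apply hcont_pos_at; auto.
Qed.

Lemma reg_energy_deriv mu t : 0 < t ->
  derivable_pt_lim (reg_energy c mu) t (reg_energy_rate c mu t).
Proof.
  intro Ht.
  assert (Dy := Jdu_deriv Ht).
  assert (Cy : hcont_at (fun s => J c (du s)) t) by (apply hcont_at_map; auto; apply hcont_pos_at; auto).
  assert (Du : hderiv_at u (du t) t) by (apply hderiv_pos_at; auto; apply u_deriv; lra).
  assert (Dz : hderiv_at (fun s => J c (u s)) (J c (du t)) t) by (apply hderiv_at_map; auto).
  assert (Cz : hcont_at (fun s => J c (u s)) t) by (apply hcont_at_map; auto; apply hcont_pos_at; auto).
  assert (P1 := derivable_pt_lim_inner Dy Dy Cy).
  assert (P2 := derivable_pt_lim_inner Du Dz Cz).
  assert (P3 := derivable_pt_lim_inner Dz Dz Cz).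
  assert (H := derivable_pt_lim_plus _ _ _ _ _
    (derivable_pt_lim_minus _ _ _ _ _
      (derivable_pt_lim_plus _ _ _ _ _ P1 (derivable_pt_lim_scal _ c _ _ P2))
      (derivable_pt_lim_scal _ c _ _ P3))
    (derivable_pt_lim_scal _ mu _ _ P3)).
  unfold reg_energy. match type of H with derivable_pt_lim _ _ ?l =>
    replace (reg_energy_rate c mu t) with l; [exact H|] end.
  unfold reg_energy_rate. inner_simpl.
  rewrite (hinner_sym _ (J c (du t)) (J c (g t))), (hinner_sym _ (J c (u t)) (J c (du t))),
    (hinner_sym _ (u t) (J c (du t))), (J_sym (du t) (u t)).
  ring.
Qed.

Lemma reg_energy_eq mu t : 0 <= t ->
  reg_energy c mu t = hinner (J c (du t)) (J c (du t)) + hinner (J c (B (u t))) (J c (B (u t)))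
                      + mu * hinner (J c (u t)) (J c (u t)).
Proof.
  intro Ht. unfold reg_energy. rewrite <- (Jres_potential HA HB Hspec Hc _ (u_dom Ht)). ring.
Qed.

Lemma reg_energy_nonneg mu t : 0 <= mu -> 0 <= t -> 0 <= reg_energy c mu t.
Proof.
  intros Hmu Ht. rewrite reg_energy_eq by exact Ht.
  assert (H1 := hinner_pos X (J c (du t))). assert (H2 := hinner_pos X (J c (B (u t)))).
  assert (H3 := hinner_pos X (J c (u t))). nra.
Qed.

Lemma reg_energy_rate_lower a mu G t :
  0 < delta -> 4 * delta <= a -> 0 <= mu -> mu <= 4 * delta * (a - 4 * delta) ->
  0 <= t -> hnorm (g t) <= G ->
  reg_energy_rate c mu t >= - a * reg_energy c mu t - 2 * G * sqrt (reg_energy c mu t).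
Proof.
  intros Hd Ha Hmu Hmua Ht HG.
  assert (HE0 := reg_energy_nonneg Hmu Ht).
  assert (HE := reg_energy_eq mu Ht).
  set (E := reg_energy c mu t) in *. unfold reg_energy_rate.
  set (y := J c (du t)) in *. set (z := J c (u t)) in *.
  rewrite <- (hnorm_sqr y), <- (hnorm_sqr z), <- (hnorm_sqr (J c (B (u t)))) in HE.
  rewrite <- (hnorm_sqr y).
  assert (HP := hnorm_ge0 (J c (B (u t)))). set (P := hnorm (J c (B (u t)))) in *.
  set (Y := hnorm y) in *. set (Z := hnorm z) in *.
  assert (HY : 0 <= Y) by apply hnorm_ge0. assert (HZ : 0 <= Z) by apply hnorm_ge0.
  assert (HYE : Y <= sqrt E) by (rewrite <- (sqrt_square Y) by exact HY; apply sqrt_le_1_alt; nra).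
  assert (H1 := Rabs_le_between (Rle_trans _ _ _ (Cauchy_Schwarz (J c (g t)) y)
                  (Rmult_le_compat_r _ _ _ HY (Rle_trans _ _ _ (J_contr (g t)) HG)))).
  assert (H2 := Rabs_le_between (Cauchy_Schwarz y z)). fold Y Z in H2.
  assert (HG0 := Rle_trans _ _ _ (hnorm_ge0 (g t)) HG).
  assert (K1 := cross_term_le Hd Ha Hmu Hmua HY HZ).
  assert (K2 : G * Y <= G * sqrt E) by (apply Rmult_le_compat_l; assumption).
  assert (K3 : - (mu * (Y * Z)) <= mu * hinner y z)
    by (replace (- (mu * (Y * Z))) with (mu * - (Y * Z)) by ring; apply Rmult_le_compat_l; lra).
  assert (K4 : 0 <= a * (P * P)) by (apply Rmult_le_pos; [lra | apply Rmult_le_pos; exact HP]).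
  assert (HaE : a * E = a * (Y * Y) + a * (P * P) + a * mu * (Z * Z)) by (rewrite HE; ring).
  lra.
Qed.

Lemma reg_energy_monotone a mu G eta t h :
  0 < delta -> 4 * delta <= a -> 0 <= mu -> mu <= 4 * delta * (a - 4 * delta) ->
  0 < t -> 0 < h -> 0 < eta -> (forall s, t <= s <= t + h -> hnorm (g s) <= G) ->
  (sqrt (reg_energy c mu t + eta) + 2 * G / a) * exp (a / 2 * t) <=
  (sqrt (reg_energy c mu (t + h) + eta) + 2 * G / a) * exp (a / 2 * (t + h)).
Proof.
  intros Hd Ha Hmu Hmua Ht Hh Heta HG.
  set (E := reg_energy c mu).
  set (F' := fun s => reg_energy_rate c mu s / (2 * sqrt (E s + eta)) * exp (a / 2 * s)
                      + (sqrt (E s + eta) + 2 * G / a) * (a / 2 * exp (a / 2 * s))).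
  assert (HE : forall s, t <= s <= t + h -> 0 <= E s) by (intros; apply reg_energy_nonneg; lra).
  destruct (MVT_cor2 (fun s => (sqrt (E s + eta) + 2 * G / a) * exp (a / 2 * s)) F' t (t + h))
    as [s [Es Hs]]; [lra| |].
  { intros s Hs. unfold F'.
    apply (derivable_pt_lim_mult (fun z => sqrt (E z + eta) + 2 * G / a) (fun z => exp (a / 2 * z)));
      [|apply derivable_pt_lim_exp_scal].
    replace (reg_energy_rate c mu s / (2 * sqrt (E s + eta)))
      with (reg_energy_rate c mu s / (2 * sqrt (E s + eta)) + 0) by ring.
    apply derivable_pt_lim_plus; [|apply derivable_pt_lim_const].
    apply (derivable_pt_lim_sqrt_comp (f := fun z => E z + eta)); [|assert (0 <= E s) by auto; lra].
    replace (reg_energy_rate c mu s) with (reg_energy_rate c mu s + 0) by ring.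
    apply derivable_pt_lim_plus; [apply reg_energy_deriv; lra | apply derivable_pt_lim_const]. }
  enough (F' s >= 0) by nra.
  assert (Hs' : t <= s <= t + h) by lra.
  assert (Hrate := reg_energy_rate_lower Hd Ha Hmu Hmua (Rlt_le _ _ (Rlt_trans _ _ _ Ht (proj1 Hs)))
                     (HG s Hs')).
  assert (Hnonneg := rate_over_sqrt_nonneg (a := a) (E := E s) ltac:(lra) (HE s Hs') Heta
                       (Rle_trans _ _ _ (hnorm_ge0 (g s)) (HG s Hs')) Hrate).
  assert (Hx := exp_pos (a / 2 * s)). unfold F'.
  replace (reg_energy_rate c mu s / (2 * sqrt (E s + eta)) * exp (a / 2 * s)
    + (sqrt (E s + eta) + 2 * G / a) * (a / 2 * exp (a / 2 * s)))
    with ((reg_energy_rate c mu s / (2 * sqrt (E s + eta)) + (sqrt (E s + eta) + 2 * G / a) * (a / 2))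
          * exp (a / 2 * s)) by ring.
  apply Rle_ge, Rmult_le_pos; lra.
Qed.

End FixedParameter.

Lemma energy_nonneg mu t : 0 <= mu -> 0 <= energy mu t.
Proof.
  intro Hmu. unfold energy. assert (H1 := hinner_pos X (du t)).
  assert (H2 := hinner_pos X (B (u t))). assert (H3 := hinner_pos X (u t)). nra.
Qed.

Lemma energy_continuous mu t : 0 < t -> continuity_pt (energy mu) t.
Proof.
  intro Ht. unfold energy.
  apply continuity_pt_plus; [apply continuity_pt_plus|].
  - apply continuity_pt_inner; apply hcont_pos_at; assumption.
  - apply (continuity_pt_inner (f := fun s => B (u s)) (g := fun s => B (u s)));
      apply hcont_pos_at; assumption.
  - apply continuity_pt_mult; [apply continuity_pt_const; intros ? ?; reflexivity|].
    apply continuity_pt_inner; apply hcont_pos_at; assumption.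
Qed.

Lemma reg_energy_converges mu t : 0 <= t -> 0 <= mu ->
  forall eta, 0 < eta -> exists C, 0 < C /\ forall c, C <= c ->
    Rabs (reg_energy c mu t - energy mu t) <= eta.
Proof.
  intros Ht Hmu eta Heta.
  set (e := eta / (2 + mu)). assert (He : 0 < e) by (apply Rdiv_lt_0_compat; lra).
  destruct (Jres_norm_converges HA Hspec (du t) He) as [C1 [HC1 H1]].
  destruct (Jres_norm_converges HA Hspec (B (u t)) He) as [C2 [HC2 H2]].
  destruct (Jres_norm_converges HA Hspec (u t) He) as [C3 [HC3 H3]].
  exists (Rmax C1 (Rmax C2 C3)). split; [eapply Rlt_le_trans; [apply HC1 | apply Rmax_l]|].
  intros c Hc.
  assert (c1 : C1 <= c) by (eapply Rle_trans; [apply Rmax_l | exact Hc]).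
  assert (c2 : C2 <= c) by (eapply Rle_trans; [eapply Rle_trans; [apply Rmax_l | apply Rmax_r] | exact Hc]).
  assert (c3 : C3 <= c) by (eapply Rle_trans; [eapply Rle_trans; [apply Rmax_r | apply Rmax_r] | exact Hc]).
  rewrite (reg_energy_eq (Rlt_le_trans _ _ _ HC1 c1) mu Ht). unfold energy.
  destruct (Rabs_le_between (H1 c c1)), (Rabs_le_between (H2 c c2)), (Rabs_le_between (H3 c c3)).
  apply Rabs_le.
  assert (Hm3 : - (mu * e) <= mu * (hinner (J c (u t)) (J c (u t)) - hinner (u t) (u t)) <= mu * e).
  { split; [replace (- (mu * e)) with (mu * - e) by ring|]; apply Rmult_le_compat_l; lra. }
  assert (Hee : e * (2 + mu) = eta) by (unfold e; field; lra).
  split; nra.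
Qed.

Section Damping.
Variables a mu : R.
Hypothesis Hdelta : 0 < delta.
Hypothesis Ha : 4 * delta <= a.
Hypothesis Hmu : 0 <= mu.
Hypothesis Hmua : mu <= 4 * delta * (a - 4 * delta).

Lemma energy_local_monotone t : 0 < t -> forall e, 0 < e ->
  exists h0, 0 < h0 /\ forall h, 0 < h < h0 ->
    (sqrt (energy mu t) + 2 * (hnorm (g t) + e) / a) * exp (a / 2 * t) <=
    (sqrt (energy mu (t + h)) + 2 * (hnorm (g t) + e) / a) * exp (a / 2 * (t + h)).
Proof.
  intros Ht e He. destruct (hcont_pos_at g_cont Ht He) as [d [Hd Hgd]].
  exists d. split; [exact Hd|]. intros h Hh.
  assert (HG : forall s, t <= s <= t + h -> hnorm (g s) <= hnorm (g t) + e).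
  { intros s Hs. assert (H := hnorm_le_add_sub (g s) (g t)).
    assert (hnorm (hsub (g s) (g t)) <= e) by (apply Hgd, Rabs_def1; lra). lra. }
  apply sqrt_weighted_le_of_approx;
    [apply energy_nonneg; exact Hmu | apply exp_pos | apply exp_pos |].
  intros eta Heta.
  destruct (reg_energy_converges (Rlt_le _ _ Ht) Hmu Heta) as [C1 [HC1 H1]].
  destruct (reg_energy_converges (t := t + h) ltac:(lra) Hmu Heta) as [C2 [HC2 H2]].
  set (c := Rmax C1 C2).
  assert (c1 : C1 <= c) by apply Rmax_l. assert (c2 : C2 <= c) by apply Rmax_r.
  exists (reg_energy c mu t), (reg_energy c mu (t + h)).
  destruct (Rabs_le_between (H1 c c1)). destruct (Rabs_le_between (H2 c c2)).
  split; [lra | split; [lra|]].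
  apply reg_energy_monotone; try lra. exact HG.
Qed.

Lemma energy_right_lower t : 0 < t -> forall e, 0 < e ->
  exists h0, 0 < h0 /\ forall h, 0 < h < h0 ->
    sqrt (energy mu (t + h)) >=
    sqrt (energy mu t) - (a / 2 * sqrt (energy mu t) + hnorm (g t) + e) * h.
Proof.
  intros Ht e He. destruct (energy_local_monotone Ht He) as [h0 [Hh0 H]].
  exists h0. split; [exact Hh0|]. intros h Hh.
  assert (Ha0 : 0 < a) by lra. assert (HS := sqrt_pos (energy mu t)).
  assert (HK : 0 <= 2 * (hnorm (g t) + e) / a).
  { apply Rmult_le_pos; [assert (Hg := hnorm_ge0 (g t)); lra | apply Rlt_le, Rinv_0_lt_compat; lra]. }
  assert (Hlin := @exp_weighted_lower_linear _ _ _ (a / 2) _ _ (Rplus_le_le_0_compat _ _ HS HK) (H h Hh)).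
  replace (a / 2 * (sqrt (energy mu t) + 2 * (hnorm (g t) + e) / a) * h)
    with ((a / 2 * sqrt (energy mu t) + hnorm (g t) + e) * h) in Hlin by (field; lra).
  exact Hlin.
Qed.

Lemma energy_weighted_monotone L T1 T2 : 0 < T1 -> T1 <= T2 -> 0 <= L ->
  (forall t, T1 <= t <= T2 -> hnorm (g t) <= L * sqrt (energy mu t)) ->
  sqrt (energy mu T1) * exp ((a / 2 + L) * T1) <= sqrt (energy mu T2) * exp ((a / 2 + L) * T2).
Proof.
  intros HT1 H12 HL HgL. set (b := a / 2 + L). assert (Hb : 0 <= b) by (unfold b; lra).
  apply (@nondecreasing_of_right_lower (fun s => sqrt (energy mu s) * exp (b * s))); [exact H12| |].
  - intros t Ht. apply continuity_pt_mult; [|apply continuity_pt_exp_scal].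
    apply (continuity_pt_comp (energy mu) sqrt); [apply energy_continuous; lra|].
    apply continuity_pt_sqrt, energy_nonneg, Hmu.
  - intros t Ht eps Heps.
    refine (@right_lower_exp_weight (fun s => sqrt (energy mu s)) b t Hb (sqrt_pos _) _ eps Heps).
    intros e He. destruct (energy_right_lower (t := t) ltac:(lra) He) as [h0 [Hh0 H]].
    exists h0. split; [exact Hh0|]. intros h Hh. split; [apply sqrt_pos|].
    assert (HG := HgL t ltac:(lra)). assert (Hh' := H h Hh).
    assert ((a / 2 * sqrt (energy mu t) + hnorm (g t) + e) * h <= (b * sqrt (energy mu t) + e) * h)
      by (apply Rmult_le_compat_r; unfold b; lra).
    lra.
Qed.

End Damping.

Lemma dnorm_continuous t : 0 < t -> continuity_pt (fun s => dnorm B (u s)) t.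
Proof.
  intro Ht.
  replace (fun s => dnorm B (u s))
    with (fun s => sqrt (hinner (u s) (u s) + hinner (B (u s)) (B (u s))))
    by (apply functional_extensionality; intro s; symmetry; apply dnorm_eq).
  apply (continuity_pt_comp (fun s => hinner (u s) (u s) + hinner (B (u s)) (B (u s))) sqrt).
  - apply continuity_pt_plus.
    + apply continuity_pt_inner; apply hcont_pos_at; assumption.
    + apply (continuity_pt_inner (f := fun s => B (u s)) (g := fun s => B (u s)));
        apply hcont_pos_at; assumption.
  - apply continuity_pt_sqrt. assert (H1 := hinner_pos X (u t)).
    assert (H2 := hinner_pos X (B (u t))). lra.
Qed.

Lemma energy_ge_u mu t : 0 <= mu -> sqrt mu * hnorm (u t) <= sqrt (energy mu t).
Proof.
  intro Hmu. apply le_sqrt_of_sqr_le; [apply Rmult_le_pos; [apply sqrt_pos | apply hnorm_ge0]|].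
  replace (sqrt mu * hnorm (u t) * (sqrt mu * hnorm (u t)))
    with (sqrt mu * sqrt mu * (hnorm (u t) * hnorm (u t))) by ring.
  rewrite sqrt_sqrt, hnorm_sqr by exact Hmu. unfold energy.
  assert (H1 := hinner_pos X (du t)). assert (H2 := hinner_pos X (B (u t))). lra.
Qed.

Lemma energy_ge_Bu mu t : 0 <= mu -> hnorm (B (u t)) <= sqrt (energy mu t).
Proof.
  intro Hmu. apply le_sqrt_of_sqr_le; [apply hnorm_ge0|]. rewrite hnorm_sqr. unfold energy.
  assert (H1 := hinner_pos X (du t)). assert (H3 := hinner_pos X (u t)).
  assert (0 <= mu * hinner (u t) (u t)) by (apply Rmult_le_pos; assumption). lra.
Qed.

Lemma energy_le_dnorm mu t : 0 <= mu ->
  sqrt (energy mu t) <= sqrt (1 + mu) * (hnorm (du t) + dnorm B (u t)).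
Proof.
  intro Hmu. assert (Hv := hnorm_ge0 (du t)). assert (Hd := dnorm_ge0 B (u t)).
  assert (Hd2 := dnorm_sqr B (u t)).
  rewrite <- (sqrt_square (hnorm (du t) + dnorm B (u t))), <- sqrt_mult by nra.
  apply sqrt_le_1_alt. unfold energy. rewrite <- (hnorm_sqr (du t)).
  assert (H1 := hinner_pos X (u t)). assert (H2 := hinner_pos X (B (u t))).
  assert (mu * hinner (u t) (u t) <= mu * (dnorm B (u t) * dnorm B (u t))) by (apply Rmult_le_compat_l; lra).
  assert (0 <= mu * (hnorm (du t) * hnorm (du t))) by (apply Rmult_le_pos; nra).
  assert (0 <= mu * (hnorm (du t) * dnorm B (u t))) by (apply Rmult_le_pos; nra).
  assert (0 <= hnorm (du t) * dnorm B (u t)) by nra.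
  nra.
Qed.

Lemma energy_eq0 mu t : 0 < mu -> energy mu t = 0 -> u t = hzero.
Proof.
  intros Hmu E0. unfold energy in E0. apply hinner_def.
  assert (H1 := hinner_pos X (du t)). assert (H2 := hinner_pos X (B (u t))).
  assert (H3 := hinner_pos X (u t)). nra.
Qed.

Section Superlinear.
Variables K0 p q : R.
Hypothesis HK0 : 0 <= K0.
Hypothesis Hp : 0 < p.
Hypothesis Hq : 0 < q.
Hypothesis g_le : forall t, 0 <= t ->
  hnorm (g t) <= K0 * (rpow (hnorm (u t)) (1 + p) + rpow (hnorm (B (u t))) (1 + q)).

Lemma forcing_le_energy mu M t : 0 < mu -> 0 < M -> 0 <= t -> dnorm B (u t) <= M ->
  hnorm (g t) <= K0 * (Rpower M p / sqrt mu + Rpower M q) * sqrt (energy mu t).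
Proof.
  intros Hmu HM Ht Hd. destruct (dnorm_ge B (u t)) as [N1 N2].
  assert (R1 := rpow_superlinear_le (conj (hnorm_ge0 (u t)) (Rle_trans _ _ _ N1 Hd)) HM Hp).
  assert (R2 := rpow_superlinear_le (conj (hnorm_ge0 (B (u t))) (Rle_trans _ _ _ N2 Hd)) HM Hq).
  assert (E1 := energy_ge_u t (Rlt_le _ _ Hmu)). assert (E2 := energy_ge_Bu t (Rlt_le _ _ Hmu)).
  assert (Hs : 0 < sqrt mu) by (apply sqrt_lt_R0, Hmu).
  assert (Pp := Rpower_gt0 M p). assert (Pq := Rpower_gt0 M q).
  eapply Rle_trans; [apply g_le, Ht|]. rewrite Rmult_assoc. apply Rmult_le_compat_l; [exact HK0|].
  assert (Hu : hnorm (u t) <= sqrt (energy mu t) / sqrt mu).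
  { apply Rmult_le_reg_l with (sqrt mu); [exact Hs|].
    replace (sqrt mu * (sqrt (energy mu t) / sqrt mu)) with (sqrt (energy mu t)) by (field; lra). exact E1. }
  replace ((Rpower M p / sqrt mu + Rpower M q) * sqrt (energy mu t)) with
    (Rpower M p * (sqrt (energy mu t) / sqrt mu) + Rpower M q * sqrt (energy mu t)) by (field; lra).
  apply Rplus_le_compat; (eapply Rle_trans; [eassumption | apply Rmult_le_compat_l; lra]).
Qed.

Section Damping.
Variables a mu : R.
Hypothesis Hdelta : 0 < delta.
Hypothesis Ha : 4 * delta <= a.
Hypothesis Hmu : 0 < mu.
Hypothesis Hmua : mu <= 4 * delta * (a - 4 * delta).

Lemma energy_weighted_monotone_bounded M T1 T2 : 0 < M -> 0 < T1 -> T1 <= T2 ->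
  (forall t, T1 <= t <= T2 -> dnorm B (u t) <= M) ->
  let b := a / 2 + K0 * (Rpower M p / sqrt mu + Rpower M q) in
  sqrt (energy mu T1) * exp (b * T1) <= sqrt (energy mu T2) * exp (b * T2).
Proof.
  intros HM HT1 H12 Hbound b. apply energy_weighted_monotone; try lra.
  - apply Rmult_le_pos; [exact HK0|].
    assert (0 < Rpower M p / sqrt mu) by (apply Rdiv_lt_0_compat; [apply Rpower_gt0 | apply sqrt_lt_R0, Hmu]).
    assert (Pq := Rpower_gt0 M q). lra.
  - intros t Ht. apply forcing_le_energy; [exact Hmu | exact HM | lra | apply Hbound, Ht].
Qed.

Lemma energy_vanishes_late gamma : a / 2 < gamma ->
  (forall eps, 0 < eps -> exists T, forall t, T <= t -> dnorm B (u t) < eps) ->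
  (forall eps, 0 < eps -> exists T, forall t, T <= t ->
     (hnorm (du t) + dnorm B (u t)) * exp (gamma * t) < eps) ->
  exists T0, 0 < T0 /\ forall t, T0 <= t -> energy mu t = 0.
Proof.
  intros Hgamma Hlim Hexp.
  destruct (@superlinear_factor_small K0 p q mu (gamma - a / 2)) as [theta [Hth Hsmall]]; try lra.
  destruct (Hlim theta Hth) as [T HT].
  exists (Rmax T 1). split; [eapply Rlt_le_trans; [|apply Rmax_r]; lra|]. intros T1 HT1.
  assert (HT1' : T <= T1) by (eapply Rle_trans; [apply Rmax_l | exact HT1]).
  assert (HT10 : 0 < T1) by (assert (1 <= Rmax T 1) by apply Rmax_r; lra).
  set (b := a / 2 + K0 * (Rpower theta p / sqrt mu + Rpower theta q)).
  assert (Hb : b <= gamma) by (unfold b; lra).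
  apply (eq0_of_sqrt_mul_exp_le0 (k := b * T1)); [apply energy_nonneg; lra|].
  apply Rle_plus_epsilon. intros z Hz. rewrite Rplus_0_l.
  assert (Hs1 : 0 < sqrt (1 + mu)) by (apply sqrt_lt_R0; lra).
  destruct (Hexp (z / sqrt (1 + mu))) as [T' HT']; [apply Rdiv_lt_0_compat; lra|].
  set (T2 := Rmax T1 T'). assert (H12 : T1 <= T2) by apply Rmax_l.
  eapply Rle_trans.
  { apply (energy_weighted_monotone_bounded (M := theta)); [exact Hth | exact HT10 | exact H12|].
    intros t Ht. apply Rlt_le, HT. lra. }
  fold b. specialize (HT' T2 (Rmax_r _ _)).
  assert (HE2 := energy_le_dnorm T2 (Rlt_le _ _ Hmu)).
  assert (Hex : exp (b * T2) <= exp (gamma * T2)) by (apply exp_le_exp, Rmult_le_compat_r; lra).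
  apply Rle_trans with (sqrt (1 + mu) * ((hnorm (du T2) + dnorm B (u T2)) * exp (gamma * T2))).
  - rewrite <- Rmult_assoc.
    apply Rmult_le_compat; [apply sqrt_pos | apply Rlt_le, exp_pos | exact HE2 | exact Hex].
  - apply Rlt_le. apply Rmult_lt_compat_l with (r := sqrt (1 + mu)) in HT'; [|exact Hs1].
    replace (sqrt (1 + mu) * (z / sqrt (1 + mu))) with z in HT' by (field; lra). exact HT'.
Qed.

Lemma energy_vanishes_early T0 t : 0 < t <= T0 -> energy mu T0 = 0 -> energy mu t = 0.
Proof.
  intros Ht E0.
  destruct (continuity_ab_maj (fun s => dnorm B (u s)) t T0) as [Mx [HMx _]]; [lra| |].
  { intros s Hs. apply dnorm_continuous. lra. }
  set (M := dnorm B (u Mx) + 1).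
  assert (HM : 0 < M) by (assert (H := dnorm_ge0 B (u Mx)); unfold M; lra).
  assert (Hmono := energy_weighted_monotone_bounded (M := M) HM (proj1 Ht) (proj2 Ht)).
  cbv zeta in Hmono. rewrite E0, sqrt_0, Rmult_0_l in Hmono.
  apply (eq0_of_sqrt_mul_exp_le0 (k := (a / 2 + K0 * (Rpower M p / sqrt mu + Rpower M q)) * t));
    [apply energy_nonneg; lra|].
  apply Hmono. intros s Hs. assert (H := HMx s Hs). simpl in H. unfold M. lra.
Qed.

End Damping.

Lemma solution_vanishes gamma : 0 < delta -> 2 * delta < gamma ->
  (forall eps, 0 < eps -> exists T, forall t, T <= t -> dnorm B (u t) < eps) ->
  (forall eps, 0 < eps -> exists T, forall t, T <= t ->
     (hnorm (du t) + dnorm B (u t)) * exp (gamma * t) < eps) ->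
  forall t, 0 <= t -> u t = hzero.
Proof.
  intros Hdelta Hgamma Hlim Hexp.
  set (kappa := gamma - 2 * delta). assert (Hk : 0 < kappa) by (unfold kappa; lra).
  assert (Hmu : 0 < 4 * delta * kappa) by (apply Rmult_lt_0_compat; lra).
  destruct (@energy_vanishes_late (4 * delta + kappa) (4 * delta * kappa) Hdelta ltac:(lra) Hmu
              ltac:(right; ring) gamma ltac:(unfold kappa; lra) Hlim Hexp) as [T0 [HT0 Hlate]].
  assert (Hpos : forall t, 0 < t -> u t = hzero).
  { intros t Ht. apply (energy_eq0 Hmu). destruct (Rle_or_lt T0 t) as [HTt|HTt].
    - apply Hlate, HTt.
    - apply (@energy_vanishes_early (4 * delta + kappa) _ Hdelta ltac:(lra) Hmu ltac:(right; ring) T0);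
        [lra | apply Hlate, Rle_refl]. }
  intros t Ht. destruct (Req_dec t 0) as [->|]; [|apply Hpos; lra].
  apply hcont_pos_zero_at0; assumption.
Qed.

End Superlinear.

End Solution.

Theorem mainTheorem5
  (X : RHilbert) (DA : X -> Prop) (A : X -> X) (DB : X -> Prop) (B : X -> X)
  (delta : R) (Hdelta : 0 < delta)
  (HA : nonneg_self_adjoint DA A)
  (HB : is_sqrt_op DA A DB B)
  (Hspec : discrete_point_spectrum DA A)
  (K0 p q : R) (HK0 : 0 <= K0) (Hp : 0 < p) (Hq : 0 < q)
  (u du : R -> X)
  (Hsol : global_solution DB B delta K0 p q u du)
  (Hlim : forall eps, 0 < eps -> exists T, forall t, T <= t -> dnorm B (u t) < eps)
  (gamma : R) (Hgamma : 2 * delta < gamma)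
  (Hexp : forall eps, 0 < eps -> exists T, forall t, T <= t ->
            (hnorm (du t) + dnorm B (u t)) * exp (gamma * t) < eps) :
  forall t, 0 <= t -> u t = @hzero X.
Proof.
  destruct Hsol as [u_dom [u_cont [Bu_cont [u_deriv [du_cont [g [g_cont [du_weak g_le]]]]]]]].
  exact (solution_vanishes HA HB Hspec u_dom u_cont Bu_cont u_deriv du_cont g_cont du_weak
           HK0 Hp Hq g_le Hdelta Hgamma Hlim Hexp).
Qed.
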